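(* Let $k\ge1$ and $B>0$ be constants. Consider the Ising model on the complete bipartite graph with parts $V_L,V_R$, $|V_L|=n$, $|V_R|=kn$, with $\beta_{uv}=-\frac12\log(1-\frac{B}{n\sqrt k})$ for all edges and $\gamma_v=0$ for all $v$. For each $n$ let $(\hat\alpha_L^{(n)},\hat\alpha_R^{(n)})$ be a phase maximizing $\Pr(\alpha_L,\alpha_R)$. Then as $n\to\infty$, $(\hat\alpha_L^{(n)},\hat\alpha_R^{(n)})\to(1/2,1/2)$ if $B\le2$, and $(\hat\alpha_L^{(n)},\hat\alpha_R^{(n)})\to(\alpha_L^*,\alpha_R^* )$ if $B>2$, where $(\alpha_L^*,\alpha_R^* )$ is the unique solution in $(1/2,1)^2$ of $\exp(B\sqrt k(1-2\alpha_R))=\frac{1-\alpha_L}{\alpha_L}$, $\exp(\frac{B}{\sqrt k}(1-2\alpha_L))=\frac{1-\alpha_R}{\alpha_R}$.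
   Context: Ising model: $\mu(\sigma)\propto\exp(\sum_{(u,v)\in E}\beta_{uv}\sigma_u\sigma_v)$ on $\{-1,1\}^{V_L\cup V_R}$. Phase: for $\sigma$, let $V_s(\sigma)$ be the set of vertices of spin $s$ and let $s$ be a spin with $|V_s(\sigma)|\ge(|V_L|+|V_R|)/2$; then $\alpha(\sigma)=\big(|V_s(\sigma)\cap V_L|/|V_L|,\,|V_s(\sigma)\cap V_R|/|V_R|\big)$. $\Pr(\alpha_L,\alpha_R)=\sum_{\sigma:\alpha(\sigma)=(\alpha_L,\alpha_R)}\mu(\sigma)$. *)

From Stdlib Require Import Reals List.
Import ListNotations.
Open Scope R_scope.

(* All spin configurations on m labelled vertices: lists of length m,
   true = spin +1, false = spin -1. *)
Fixpoint configs (m : nat) : list (list bool) :=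
  match m with
  | O => [ [] ]
  | S m' => flat_map (fun l => [true :: l; false :: l]) (configs m')
  end.

Definition spin (b : bool) : R := if b then 1 else -1.

Definition sumR {A : Type} (f : A -> R) (l : list A) : R :=
  fold_right Rplus 0 (map f l).

Definition beta (k : nat) (B : R) (n : nat) : R :=
  - / 2 * ln (1 - B / (INR n * sqrt (INR k))).

Definition energy (k : nat) (B : R) (n : nat) (sL sR : list bool) : R :=
  sumR (fun u => sumR (fun v => beta k B n * spin u * spin v) sR) sL.

Definition weight (k : nat) (B : R) (n : nat) (sL sR : list bool) : R :=
  exp (energy k B n sL sR).

Definition count_true (s : list bool) : nat := count_occ Bool.bool_dec s true.

(* Phase alpha(sigma). s is the majority spin; in case of an exact tie we take
   s = +1 (convention). *)
Definition phase (k : nat) (n : nat) (sL sR : list bool) : R * R :=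
  let pL := count_true sL in
  let pR := count_true sR in
  if Rle_dec (INR (n + k * n) / 2) (INR (pL + pR))
  then (INR pL / INR n, INR pR / INR (k * n))
  else (INR (n - pL) / INR n, INR (k * n - pR) / INR (k * n)).

Definition pair_eqb (a b : R * R) : bool :=
  if Req_EM_T (fst a) (fst b) then
    if Req_EM_T (snd a) (snd b) then true else false
  else false.

Definition Zpart (k : nat) (B : R) (n : nat) : R :=
  sumR (fun sL => sumR (fun sR => weight k B n sL sR) (configs (k * n))) (configs n).

Definition Pr (k : nat) (B : R) (n : nat) (a : R * R) : R :=
  sumR (fun sL => sumR (fun sR =>
          if pair_eqb (phase k n sL sR) a then weight k B n sL sR else 0)
        (configs (k * n))) (configs n) / Zpart k B n.

From Stdlib Require Import Reals Lra Lia Psatz List Classical.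
From Coquelicot Require Import Coquelicot.
Import ListNotations.
Open Scope R_scope.

(* All configurations with [i] plus spins on [V_L] and [j] on [V_R] have the
   same weight, so [Pr] of the phase [(x, y) = (i/n, j/(kn))] is, up to factors
   polynomial in [n], [exp (n rate(x, y))] with
     rate(x, y) = H(x) + k H(y) + (B sqrt k / 2)(2x - 1)(2y - 1),
   [H] the binary entropy.  The most likely phase therefore converges to any strict
   maximizer of [rate] on the majority phases.  Maximizing out [y] by the Gibbs
   variational principle [H(y) + t(2y - 1) <= ln (2 cosh t)] leaves a one-variable profile
   whose derivative has the sign of [a th (b u) - artanh u], [a b = B^2/4].  For [B <= 2]
   this is negative on [(0, 1)], so the maximum is at [(1/2, 1/2)]; for [B > 2] it
   changes sign exactly once, because [th s / s] is decreasing, and the maximum sits at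
   the unique positive solution of the mean-field equations. *)

Lemma mean_value_open (f df : R -> R) a b : a < b ->
  (forall x, a < x < b -> is_derive f x (df x)) ->
  (forall x, a <= x <= b -> continuity_pt f x) ->
  exists c, a < c < b /\ f b - f a = df c * (b - a).
Proof.
  intros hab hd hc.
  assert (pr1 : forall c, a < c < b -> derivable_pt f c).
  { intros c hc'. exists (df c). apply is_derive_Reals. now apply hd. }
  assert (pr2 : forall c, a < c < b -> derivable_pt id c).
  { intros c _. apply derivable_pt_id. }
  destruct (MVT f id a b pr1 pr2 hab hc) as [c [P e]].
  { intros; apply derivable_continuous_pt, derivable_pt_id. }
  exists c; split; auto.
  rewrite (derive_pt_eq_0 _ _ (df c)) in e by (apply is_derive_Reals; now apply hd).
  rewrite (derive_pt_eq_0 _ _ 1) in e by apply derivable_pt_lim_id.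
  unfold id in e. lra.
Qed.

Lemma is_derive_continuity_pt f x l : is_derive f x l -> continuity_pt f x.
Proof.
  intros h. apply continuity_pt_filterlim. apply (ex_derive_continuous f x).
  now exists l.
Qed.

Lemma increasing_of_deriv_pos f df a b : a < b ->
  (forall x, a < x < b -> is_derive f x (df x)) ->
  (forall x, a <= x <= b -> continuity_pt f x) ->
  (forall x, a < x < b -> 0 < df x) -> f a < f b.
Proof.
  intros hab hd hc hp. destruct (mean_value_open f df a b hab hd hc) as [c [hc1 e]].
  specialize (hp c hc1). nra.
Qed.

Lemma decreasing_of_deriv_neg f df a b : a < b ->
  (forall x, a < x < b -> is_derive f x (df x)) ->
  (forall x, a <= x <= b -> continuity_pt f x) ->
  (forall x, a < x < b -> df x < 0) -> f b < f a.
Proof.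
  intros hab hd hc hp. destruct (mean_value_open f df a b hab hd hc) as [c [hc1 e]].
  specialize (hp c hc1). nra.
Qed.

Lemma exp_le x y : x <= y -> exp x <= exp y.
Proof. intros [h|<-]; [left; now apply exp_increasing|lra]. Qed.

Lemma ln_le_sub_1 x : 0 < x -> ln x <= x - 1.
Proof. intros hx. pose proof (exp_ineq1_le (ln x)) as h. rewrite exp_ln in h; lra. Qed.

Lemma ln_le_2_sqrt y : 0 < y -> ln y <= 2 * sqrt y.
Proof.
  intros hy. pose proof (sqrt_lt_R0 y hy) as hs.
  assert (e : ln y = 2 * ln (sqrt y)).
  { rewrite <- (sqrt_sqrt y) at 1 by lra. rewrite ln_mult by lra. ring. }
  pose proof (ln_le_sub_1 (sqrt y) hs). lra.
Qed.

(** * Hyperbolic tangent and its inverse *)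

Definition th (t : R) : R := (exp t - exp (- t)) / (exp t + exp (- t)).
Definition ath (w : R) : R := (ln (1 + w) - ln (1 - w)) / 2.

Lemma cosh2_pos t : 0 < exp t + exp (- t).
Proof. pose proof (exp_pos t); pose proof (exp_pos (-t)); lra. Qed.

Lemma exp_opp_mul t : exp (- t) * exp t = 1.
Proof. rewrite <- exp_plus. replace (-t + t) with 0 by ring. apply exp_0. Qed.

Lemma th_alt t : th t = 1 - 2 / (exp (2 * t) + 1).
Proof.
  unfold th. pose proof (exp_pos t). pose proof (exp_opp_mul t).
  replace (2 * t) with (t + t) by ring. rewrite exp_plus.
  rewrite exp_Ropp. field. split; nra.
Qed.

Lemma th_increasing s t : s < t -> th s < th t.
Proof.
  intros h. rewrite !th_alt. pose proof (exp_increasing (2*s) (2*t) ltac:(lra)).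
  pose proof (exp_pos (2*s)).
  apply Rplus_lt_compat_l, Ropp_lt_contravar.
  unfold Rdiv. apply Rmult_lt_compat_l. lra. apply Rinv_lt_contravar; nra.
Qed.

Lemma th_lt_inv x y : th x < th y -> x < y.
Proof.
  intros h. destruct (Rlt_or_le x y) as [h'|[h'|h']]; auto.
  - apply th_increasing in h'; lra.
  - subst; lra.
Qed.

Lemma th_0 : th 0 = 0.
Proof. unfold th. rewrite Ropp_0, exp_0. field. Qed.

Lemma th_bound t : -1 < th t < 1.
Proof.
  rewrite th_alt. pose proof (exp_pos (2*t)).
  assert (0 < 2 / (exp (2*t) + 1)) by (apply Rdiv_lt_0_compat; lra).
  assert (2 / (exp (2*t) + 1) < 2).
  { apply Rmult_lt_reg_r with (exp (2*t) + 1). lra.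
    unfold Rdiv. rewrite Rmult_assoc, Rinv_l by lra. nra. }
  lra.
Qed.

Lemma th_pos t : 0 < t -> 0 < th t.
Proof. intros; rewrite <- th_0; now apply th_increasing. Qed.

Lemma ath_th t : ath (th t) = t.
Proof.
  unfold ath, th. pose proof (exp_pos t). pose proof (exp_pos (-t)). pose proof (cosh2_pos t).
  replace (1 + (exp t - exp (- t)) / (exp t + exp (- t)))
    with (2 * exp t / (exp t + exp (-t))) by (field; lra).
  replace (1 - (exp t - exp (- t)) / (exp t + exp (- t)))
    with (2 * exp (-t) / (exp t + exp (-t))) by (field; lra).
  unfold Rdiv. rewrite !ln_mult; try lra; try (apply Rinv_0_lt_compat; lra).
  rewrite !ln_exp. field.
Qed.

Lemma th_ath w : -1 < w < 1 -> th (ath w) = w.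
Proof.
  intros hw. rewrite th_alt. unfold ath.
  replace (2 * ((ln (1 + w) - ln (1 - w)) / 2)) with (ln (1+w) + - ln (1-w)) by field.
  rewrite exp_plus, exp_Ropp, !exp_ln by lra. field. lra.
Qed.

Lemma exp_opp_2_ath w : -1 < w < 1 -> exp (- (2 * ath w)) = (1 - w) / (1 + w).
Proof.
  intros hw. unfold ath.
  replace (- (2 * ((ln (1 + w) - ln (1 - w)) / 2))) with (ln (1 - w) + - ln (1 + w)) by field.
  rewrite exp_plus, exp_Ropp, !exp_ln by lra. field. lra.
Qed.

(* [t cosh t - sinh t] has derivative [t sinh t > 0]. *)
Lemma th_lt t : 0 < t -> th t < t.
Proof.
  intros ht.
  set (f := fun s => s * (exp s + exp (-s)) - (exp s - exp (-s))).
  assert (hd : forall s, is_derive f s (s * (exp s - exp (-s)))).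
  { intros s; unfold f; auto_derive; auto. ring. }
  assert (hf : f 0 < f t).
  { apply (increasing_of_deriv_pos f (fun s => s * (exp s - exp (-s))) 0 t); auto.
    - intros; eapply is_derive_continuity_pt; apply hd.
    - intros x hx. apply Rmult_lt_0_compat; [lra|].
      pose proof (exp_increasing (-x) x ltac:(lra)). lra. }
  unfold f in hf. rewrite Ropp_0, exp_0 in hf. unfold th.
  pose proof (cosh2_pos t).
  apply Rmult_lt_reg_r with (exp t + exp (-t)); auto. unfold Rdiv.
  rewrite Rmult_assoc, Rinv_l by lra. lra.
Qed.

Lemma ath_gt w : 0 < w < 1 -> w < ath w.
Proof. intros hw. apply th_lt_inv. rewrite th_ath by lra. apply th_lt; lra. Qed.

Lemma sinh2_gt s : 0 < s -> 4 * s < (exp s - exp (-s)) * (exp s + exp (-s)).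
Proof.
  intros hs.
  set (p := fun x => (exp x - exp (-x)) * (exp x + exp (-x)) - 4 * x).
  assert (hd : forall x, is_derive p x (2 * ((exp x)^2 + (exp (-x))^2) - 4)).
  { intros x; unfold p; auto_derive; auto. ring. }
  assert (hp : p 0 < p s).
  { apply (increasing_of_deriv_pos p (fun x => 2 * ((exp x)^2 + (exp (-x))^2) - 4) 0 s hs); auto.
    - intros; eapply is_derive_continuity_pt; apply hd.
    - intros x hx. pose proof (exp_opp_mul x). pose proof (exp_increasing (-x) x ltac:(lra)).
      pose proof (exp_pos (-x)). nra. }
  unfold p in hp. rewrite Ropp_0, exp_0 in hp. lra.
Qed.

(* [th s / s] is strictly decreasing on [(0, +oo)]: its derivative has the sign of
   [4 s - sinh (2 s)]. *)
Lemma th_ratio_decreasing s1 s2 : 0 < s1 -> s1 < s2 -> th s2 * s1 < th s1 * s2.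
Proof.
  intros h1 h12.
  set (q := fun s => th s / s).
  set (dq := fun s => (s * (4 / (exp s + exp (-s))^2) - th s) / s^2).
  assert (hd : forall s, 0 < s -> is_derive q s (dq s)).
  { intros s hs; unfold q, dq, th. pose proof (cosh2_pos s).
    auto_derive. split; [lra|split;[lra|auto]].
    rewrite exp_Ropp in *. pose proof (exp_pos s). field. split; [lra|split;[nra|lra]]. }
  assert (hq : q s2 < q s1).
  { apply (decreasing_of_deriv_neg q dq s1 s2 h12).
    - intros; apply hd; lra.
    - intros; eapply is_derive_continuity_pt; apply hd; lra.
    - intros x hx. unfold dq. apply Rdiv_neg_pos; [|apply pow_lt; lra].
      pose proof (cosh2_pos x). pose proof (sinh2_gt x ltac:(lra)).
      unfold th. apply Rlt_minus. unfold Rdiv.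
      apply Rmult_lt_reg_r with ((exp x + exp (-x))^2). apply pow_lt; lra.
      replace (x * (4 * / (exp x + exp (- x)) ^ 2) * (exp x + exp (- x)) ^ 2)
        with (4 * x) by (field; lra).
      replace ((exp x - exp (- x)) * / (exp x + exp (- x)) * (exp x + exp (- x)) ^ 2)
        with ((exp x - exp (- x)) * (exp x + exp (- x))) by (field; lra). lra. }
  unfold q in hq. apply Rmult_lt_reg_r with (/ (s1 * s2)).
  apply Rinv_0_lt_compat; nra.
  replace (th s2 * s1 * / (s1 * s2)) with (th s2 / s2) by (field; lra).
  replace (th s1 * s2 * / (s1 * s2)) with (th s1 / s1) by (field; lra). lra.
Qed.

(** * The mean-field equation *)

(* Positive zeros of [phi A S] are the positive solutions of [w = th (A th (S w))]. *)
Definition phi (A S w : R) : R := A * th (S * w) - ath w.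
Definition th_iter (A S w : R) : R := th (A * th (S * w)).

Lemma phi_sign A S w : 0 < w < 1 ->
  (0 < phi A S w <-> w < th_iter A S w) /\ (phi A S w < 0 <-> th_iter A S w < w) /\
  (phi A S w = 0 <-> th_iter A S w = w).
Proof.
  intros hw. unfold phi, th_iter. assert (E : th (ath w) = w) by (apply th_ath; lra).
  split; [|split]; split; intros h.
  - rewrite <- E at 1. apply th_increasing; lra.
  - rewrite <- E in h at 1. apply th_lt_inv in h; lra.
  - rewrite <- E at 2. apply th_increasing; lra.
  - rewrite <- E in h at 2. apply th_lt_inv in h; lra.
  - replace (A * th (S * w)) with (ath w) by lra. exact E.
  - destruct (Rtotal_order (A * th (S * w)) (ath w)) as [h'|[h'|h']].
    + apply th_increasing in h'; lra.
    + lra.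
    + apply th_increasing in h'; lra.
Qed.

Lemma phi_neg_subcritical A S w : 0 < A -> 0 < S -> A * S <= 1 -> 0 < w < 1 -> phi A S w < 0.
Proof.
  intros hA hS hAS hw. unfold phi. pose proof (ath_gt w hw).
  pose proof (th_lt (S*w) ltac:(nra)). nra.
Qed.

(* Composition of two maps [s |-> c th s] whose ratio to [s] decreases. *)
Lemma th_iter_ratio_decreasing A S w1 w2 : 0 < A -> 0 < S -> 0 < w1 -> w1 < w2 ->
  th_iter A S w2 * w1 < th_iter A S w1 * w2.
Proof.
  intros hA hS h1 h12. unfold th_iter.
  set (t1 := th (S*w1)). set (t2 := th (S*w2)).
  assert (ht1 : 0 < t1) by (apply th_pos; nra).
  assert (ht12 : t1 < t2) by (apply th_increasing; nra).
  pose proof (th_ratio_decreasing (S*w1) (S*w2) ltac:(nra) ltac:(nra)) as r1. fold t1 t2 in r1.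
  pose proof (th_ratio_decreasing (A*t1) (A*t2) ltac:(nra) ltac:(nra)) as r2.
  assert (p1 : 0 < th (A*t1)) by (apply th_pos; nra).
  assert (p2 : 0 < th (A*t2)) by (apply th_pos; nra).
  assert (r1' : t2 * w1 < t1 * w2) by nra.
  assert (r2' : th (A*t2) * t1 < th (A*t1) * t2) by nra.
  apply Rmult_lt_reg_r with t1; auto.
  apply Rlt_trans with (th (A*t1) * t2 * w1); nra.
Qed.

Lemma phi_deriv_0 A S : is_derive (phi A S) 0 (A * S - 1).
Proof.
  unfold phi, th, ath. auto_derive.
  - rewrite Rmult_0_r, Ropp_0, exp_0. repeat split; lra.
  - rewrite !Rmult_0_r, !Ropp_0, !exp_0. field.
Qed.

Lemma phi_0 A S : phi A S 0 = 0.
Proof. unfold phi. rewrite Rmult_0_r, th_0. unfold ath. rewrite Rplus_0_r, Rminus_0_r. field. Qed.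

Lemma phi_pos_near_0 A S : 1 < A * S -> exists w, 0 < w < 1 /\ 0 < phi A S w.
Proof.
  intros h. pose proof (phi_deriv_0 A S) as hd. apply is_derive_Reals in hd.
  destruct (hd ((A*S-1)/2) ltac:(lra)) as [d hdd].
  pose proof (cond_pos d) as hd0.
  set (w := Rmin (d/2) (1/2)).
  assert (hw : 0 < w) by (unfold w; apply Rmin_pos; lra).
  assert (hw1 : w <= 1/2) by apply Rmin_r.
  assert (hw2 : w <= d/2) by apply Rmin_l.
  exists w. split; [lra|].
  specialize (hdd w ltac:(lra) ltac:(rewrite Rabs_right by lra; lra)).
  rewrite Rplus_0_l, phi_0, Rminus_0_r in hdd. apply Rabs_def2 in hdd.
  assert (hq : 0 < phi A S w / w) by lra.
  apply Rmult_lt_reg_r with (/ w). now apply Rinv_0_lt_compat. unfold Rdiv in hq. lra.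
Qed.

Lemma th_iter_continuity A S : continuity (fun w => th_iter A S w - w).
Proof.
  intros x. eapply is_derive_continuity_pt. unfold th_iter, th. auto_derive.
  - repeat split; apply Rgt_not_eq, Rplus_lt_0_compat; apply exp_pos.
  - reflexivity.
Qed.

Lemma phi_unique_root A S : 0 < A -> 0 < S -> 1 < A * S ->
  exists w, 0 < w < 1 /\ phi A S w = 0 /\
    (forall v, 0 < v < w -> 0 < phi A S v) /\ (forall v, w < v < 1 -> phi A S v < 0).
Proof.
  intros hA hS h.
  destruct (phi_pos_near_0 A S h) as [w0 [hw0 hp]].
  pose proof (proj1 (proj1 (phi_sign A S w0 hw0)) hp) as g0.
  assert (g1 : th_iter A S 1 - 1 < 0)
    by (unfold th_iter; pose proof (th_bound (A * th (S * 1))); lra).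
  destruct (IVT_gen _ w0 1 0 (th_iter_continuity A S)) as [x [hx ex]].
  { rewrite Rmin_right, Rmax_left by lra. lra. }
  rewrite Rmin_left, Rmax_right in hx by lra.
  assert (hxr : 0 < x < 1) by (assert (x <> 1) by (intros ->; lra); lra).
  exists x. split; [auto|split; [|split]].
  - apply (phi_sign A S x hxr). lra.
  - intros v hv. apply (phi_sign A S v ltac:(lra)).
    pose proof (th_iter_ratio_decreasing A S v x hA hS ltac:(lra) ltac:(lra)). nra.
  - intros v hv. apply (phi_sign A S v ltac:(lra)).
    pose proof (th_iter_ratio_decreasing A S x v hA hS ltac:(lra) ltac:(lra)). nra.
Qed.

Lemma phi_root_unique A S w w' : 0 < A -> 0 < S -> 1 < A * S ->
  0 < w < 1 -> phi A S w = 0 -> 0 < w' < 1 -> phi A S w' = 0 -> w = w'.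
Proof.
  intros hA hS h hw e hw' e'.
  destruct (phi_unique_root A S hA hS h) as [r [hr [er [h1 h2]]]].
  assert (hr_eq : forall z, 0 < z < 1 -> phi A S z = 0 -> z = r).
  { intros z hz ez. destruct (Rtotal_order z r) as [l|[l|l]]; auto.
    - specialize (h1 z ltac:(lra)); lra.
    - specialize (h2 z ltac:(lra)); lra. }
  rewrite (hr_eq w), (hr_eq w'); auto.
Qed.

(** * Binary entropy and the Gibbs variational principle *)

Definition xlx (x : R) : R := x * ln x.
Definition entropy (x : R) : R := - (xlx x + xlx (1 - x)).
Definition lcosh (t : R) : R := ln (exp t + exp (- t)).

Lemma xlx_small x : 0 < x <= 1 -> Rabs (xlx x) < 2 * sqrt x.
Proof.
  intros hx. unfold xlx. pose proof (sqrt_lt_R0 x ltac:(lra)) as hs.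
  assert (e : ln x = 2 * ln (sqrt x)).
  { rewrite <- (sqrt_sqrt x) at 1 by lra. rewrite ln_mult by lra. ring. }
  assert (hs1 : sqrt x <= 1) by (rewrite <- sqrt_1; apply sqrt_le_1_alt; lra).
  assert (hl : ln (sqrt x) <= 0) by (rewrite <- ln_1; apply ln_le; lra).
  assert (hl' : - ln (sqrt x) < / sqrt x).
  { rewrite <- ln_Rinv by lra.
    pose proof (ln_le_sub_1 (/ sqrt x) ltac:(apply Rinv_0_lt_compat; lra)). lra. }
  rewrite Rabs_left1 by (rewrite e; nra).
  rewrite e.
  assert (E2 : x = sqrt x * sqrt x) by (rewrite sqrt_sqrt; lra).
  assert (E3 : sqrt x * (- ln (sqrt x)) < sqrt x * / sqrt x) by (apply Rmult_lt_compat_l; lra).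
  rewrite Rinv_r in E3 by lra. rewrite E2 at 1. nra.
Qed.

(* Rocq's [ln] is [0] on nonpositive reals, so [xlx] is continuous everywhere. *)
Lemma ln_nonpos x : x <= 0 -> ln x = 0.
Proof. intros h. unfold ln. destruct (Rlt_dec 0 x); [exfalso; lra|reflexivity]. Qed.

Lemma xlx_continuous x : continuity_pt xlx x.
Proof.
  destruct (Rtotal_order x 0) as [h|[h|h]].
  - unfold continuity_pt, continue_in, limit1_in, limit_in. simpl. intros eps he.
    exists (- x). split; [lra|]. intros y [_ hy]. unfold Rdist in *.
    unfold xlx. rewrite (ln_nonpos x), (ln_nonpos y) by (apply Rabs_def2 in hy; lra).
    replace (y*0 - x*0) with 0 by ring. rewrite Rabs_R0. lra.
  - subst. unfold continuity_pt, continue_in, limit1_in, limit_in. simpl. intros eps he.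
    exists (Rmin 1 ((eps/2)^2)). split; [apply Rmin_pos; [lra| apply pow_lt; lra]|].
    intros y [_ hy]. unfold Rdist in *. rewrite Rminus_0_r in hy.
    unfold xlx at 2. rewrite Rmult_0_l, Rminus_0_r.
    pose proof (Rmin_l 1 ((eps/2)^2)). pose proof (Rmin_r 1 ((eps/2)^2)).
    destruct (Rle_or_lt y 0) as [hy0|hy0].
    + unfold xlx. rewrite ln_nonpos by auto. rewrite Rmult_0_r, Rabs_R0; lra.
    + rewrite Rabs_right in hy by lra.
      pose proof (xlx_small y ltac:(lra)).
      assert (sqrt y < eps / 2).
      { rewrite <- (sqrt_pow2 (eps/2)) by lra. apply sqrt_lt_1_alt. lra. }
      lra.
  - apply (is_derive_continuity_pt xlx x (ln x + 1)). unfold xlx. auto_derive; auto. field. lra.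
Qed.

Lemma entropy_continuous x : continuity_pt entropy x.
Proof.
  apply (continuity_pt_opp (fun y => xlx y + xlx (1 - y))).
  apply (continuity_pt_plus xlx (fun y => xlx (1 - y))); [apply xlx_continuous|].
  apply (continuity_pt_comp (fun y => 1 - y) xlx); [|apply xlx_continuous].
  apply (continuity_pt_minus (fun _ => 1) id); [apply continuity_pt_const; now intros|apply continuity_pt_id].
Qed.

Lemma lcosh_deriv t : is_derive lcosh t (th t).
Proof.
  unfold lcosh, th. auto_derive. pose proof (cosh2_pos t). lra.
  field. apply Rgt_not_eq, cosh2_pos.
Qed.

Lemma lcosh_0 : lcosh 0 = ln 2.
Proof. unfold lcosh. rewrite Ropp_0, exp_0. f_equal; ring. Qed.

Lemma lcosh_opp t : lcosh (- t) = lcosh t.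
Proof. unfold lcosh. rewrite Ropp_involutive, Rplus_comm. reflexivity. Qed.

Lemma entropy_sym x : entropy (1 - x) = entropy x.
Proof. unfold entropy. replace (1 - (1 - x)) with x by ring. ring. Qed.

Lemma xlx_ge y p : 0 <= y -> 0 < p -> y - p <= xlx y - y * ln p.
Proof.
  intros hy hp. unfold xlx. destruct hy as [hy|hy].
  - pose proof (ln_le_sub_1 (p / y) ltac:(apply Rdiv_lt_0_compat; lra)) as h.
    unfold Rdiv in h. rewrite ln_mult, ln_Rinv in h by (try apply Rinv_0_lt_compat; lra).
    assert (y * (ln p - ln y) <= y * (p * / y - 1)) by (apply Rmult_le_compat_l; lra).
    replace (y * (p * / y - 1)) with (p - y) in * by (field; lra). lra.
  - subst. lra.
Qed.

(* The Bernoulli law tilted by [t]: the maximizer in the variational principle below. *)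
Definition gibbs_p (t : R) : R := exp t / (exp t + exp (- t)).

Lemma ln_gibbs_p t : ln (gibbs_p t) = t - lcosh t.
Proof.
  unfold gibbs_p, lcosh, Rdiv. pose proof (cosh2_pos t).
  rewrite ln_mult, ln_Rinv, ln_exp; try apply exp_pos; try lra. apply Rinv_0_lt_compat; lra.
Qed.

Lemma ln_one_minus_gibbs_p t : ln (1 - gibbs_p t) = - t - lcosh t.
Proof.
  assert (e : 1 - gibbs_p t = gibbs_p (- t)).
  { unfold gibbs_p. rewrite Ropp_involutive. pose proof (cosh2_pos t). field. lra. }
  rewrite e, ln_gibbs_p, lcosh_opp. ring.
Qed.

Lemma gibbs_p_bound t : 0 < gibbs_p t < 1.
Proof.
  unfold gibbs_p. pose proof (exp_pos t). pose proof (exp_pos (-t)). pose proof (cosh2_pos t).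
  split; [apply Rdiv_lt_0_compat; lra|].
  apply Rmult_lt_reg_r with (exp t + exp (-t)); auto.
  unfold Rdiv. rewrite Rmult_assoc, Rinv_l by lra. lra.
Qed.

Lemma gibbs_p_th t : gibbs_p t = (1 + th t) / 2.
Proof. unfold gibbs_p, th. pose proof (cosh2_pos t). field. lra. Qed.

(* Nonnegativity of the relative entropy to the Bernoulli law [gibbs_p t]. *)
Lemma entropy_variational y t : 0 <= y <= 1 -> entropy y + t * (2 * y - 1) <= lcosh t.
Proof.
  intros hy. pose proof (gibbs_p_bound t).
  pose proof (xlx_ge y (gibbs_p t) ltac:(lra) ltac:(lra)) as h1.
  pose proof (xlx_ge (1 - y) (1 - gibbs_p t) ltac:(lra) ltac:(lra)) as h2.
  rewrite ln_gibbs_p in h1. rewrite ln_one_minus_gibbs_p in h2. unfold entropy. nra.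
Qed.

Lemma entropy_variational_eq t : entropy (gibbs_p t) + t * (2 * gibbs_p t - 1) = lcosh t.
Proof. unfold entropy, xlx. rewrite ln_gibbs_p, ln_one_minus_gibbs_p. ring. Qed.

Lemma entropy_le_ln2 y : 0 <= y <= 1 -> entropy y <= ln 2.
Proof. intros hy. pose proof (entropy_variational y 0 hy) as h. rewrite lcosh_0 in h. lra. Qed.

Lemma entropy_half : entropy (1/2) = ln 2.
Proof.
  pose proof (entropy_variational_eq 0) as h. rewrite lcosh_0 in h.
  unfold gibbs_p in h. rewrite Ropp_0, exp_0 in h.
  replace (1 / (1 + 1)) with (1/2) in h by field. lra.
Qed.

(** * The rate function and its strict maximum *)

(* [profile_L (2 x - 1)] and [profile_R (2 y - 1)] below are the suprema of the rate over
   the other coordinate (Gibbs variational principle). *)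
Definition profile (c1 c2 s w : R) : R := c1 * entropy ((1 + w) / 2) + c2 * lcosh (s * w).

Lemma profile_continuous c1 c2 s w : continuity_pt (profile c1 c2 s) w.
Proof.
  apply (continuity_pt_plus (fun w => c1 * entropy ((1 + w) / 2)) (fun w => c2 * lcosh (s * w))).
  - apply (continuity_pt_scal (fun w => entropy ((1 + w) / 2))).
    apply (continuity_pt_comp (fun y => (1 + y) / 2) entropy); [|apply entropy_continuous].
    apply (is_derive_continuity_pt _ _ (/2)). auto_derive; auto. field.
  - apply (continuity_pt_scal (fun w => lcosh (s * w))).
    apply (is_derive_continuity_pt _ _ (s * th (s * w))).
    apply (is_derive_comp lcosh (fun y => s * y)); [apply lcosh_deriv|].
    auto_derive; auto. ring.
Qed.

Lemma profile_deriv c1 c2 s w : 0 < c1 -> -1 < w < 1 ->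
  is_derive (profile c1 c2 s) w (c1 * phi (c2 * s / c1) s w).
Proof.
  intros hc hw.
  assert (D : is_derive (profile c1 c2 s) w
     (c1 * (- (ln ((1 + w) * / 2) - ln (1 + - ((1 + w) * / 2))) / 2) + c2 * (s * th (s * w)))).
  { unfold profile, entropy, xlx, lcosh, th. auto_derive.
    - repeat split; try lra. apply cosh2_pos.
    - pose proof (cosh2_pos (s*w)). field. repeat split; lra. }
  replace (c1 * phi (c2 * s / c1) s w) with
     (c1 * (- (ln ((1 + w) * / 2) - ln (1 + - ((1 + w) * / 2))) / 2) + c2 * (s * th (s * w))).
  { exact D. }
  unfold phi, ath.
  replace (1 + - ((1 + w) * / 2)) with ((1 - w) * / 2) by field.
  rewrite !ln_mult by (try apply Rinv_0_lt_compat; lra). field. lra.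
Qed.

Definition unimodal_at (G : R -> R) (c : R) : Prop :=
  (forall w1 w2, 0 <= w1 -> w1 < w2 -> w2 <= c -> G w1 < G w2) /\
  (forall w1 w2, c <= w1 -> w1 < w2 -> w2 <= 1 -> G w2 < G w1).

Lemma profile_unimodal c1 c2 s c : 0 < c1 -> 0 <= c < 1 ->
  (forall w, 0 < w < c -> 0 < phi (c2 * s / c1) s w) ->
  (forall w, c < w < 1 -> phi (c2 * s / c1) s w < 0) ->
  unimodal_at (profile c1 c2 s) c.
Proof.
  intros hc1 hc hpos hneg. split; intros w1 w2 h1 h12 h2.
  - apply (increasing_of_deriv_pos _ (fun w => c1 * phi (c2 * s / c1) s w) w1 w2 h12).
    + intros; apply profile_deriv; auto; lra.
    + intros; apply profile_continuous.
    + intros x hx. specialize (hpos x ltac:(lra)). nra.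
  - apply (decreasing_of_deriv_neg _ (fun w => c1 * phi (c2 * s / c1) s w) w1 w2 h12).
    + intros; apply profile_deriv; auto; lra.
    + intros; apply profile_continuous.
    + intros x hx. specialize (hneg x ltac:(lra)). nra.
Qed.

Lemma unimodal_gap (G : R -> R) c : 0 <= c < 1 -> unimodal_at G c ->
  forall d, 0 < d -> exists eta, 0 < eta /\
    forall w, 0 <= w <= 1 -> d <= Rabs (w - c) -> G w <= G c - eta.
Proof.
  intros hc [hi hd] d hd0.
  set (r := Rmin 1 (c + d)).
  assert (hr : c < r /\ r <= 1 /\ r <= c + d).
  { unfold r. split; [apply Rmin_glb_lt; lra|split; [apply Rmin_l|apply Rmin_r]]. }
  assert (er : G r < G c) by (apply hd; lra).
  assert (right_gap : forall w, c <= w <= 1 -> d <= w - c -> G w <= G r).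
  { intros w hw hwd. destruct (Req_dec w r) as [->|hne]; [lra|].
    pose proof (hd r w ltac:(lra) ltac:(lra) ltac:(lra)). lra. }
  destruct (Rle_dec 0 (c - d)) as [hl|hl].
  - assert (el : G (c - d) < G c) by (apply hi; lra).
    exists (Rmin (G c - G r) (G c - G (c - d))). split; [apply Rmin_pos; lra|].
    intros w hw hwd. pose proof (Rmin_l (G c - G r) (G c - G (c - d))).
    pose proof (Rmin_r (G c - G r) (G c - G (c - d))).
    destruct (Rle_or_lt c w) as [hcw|hcw].
    + rewrite Rabs_right in hwd by lra. pose proof (right_gap w ltac:(lra) hwd). lra.
    + rewrite Rabs_left in hwd by lra.
      destruct (Req_dec w (c - d)) as [->|hne]; [lra|].
      pose proof (hi w (c - d) ltac:(lra) ltac:(lra) ltac:(lra)). lra.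
  - exists (G c - G r). split; [lra|].
    intros w hw hwd. destruct (Rle_or_lt c w) as [hcw|hcw].
    + rewrite Rabs_right in hwd by lra. pose proof (right_gap w ltac:(lra) hwd). lra.
    + rewrite Rabs_left in hwd by lra. lra.
Qed.

(* The exponential rate of [Pr] at the phase [(x, y)], per vertex of [V_L]. *)
Definition rate (K B x y : R) : R :=
  entropy x + K * entropy y + (B * sqrt K / 2) * ((2 * x - 1) * (2 * y - 1)).

Lemma rate_sym K B x y : rate K B (1 - x) (1 - y) = rate K B x y.
Proof. unfold rate. rewrite !entropy_sym. ring. Qed.

Lemma abs_2_sub x u : Rabs (2 * x - 1 - u) = 2 * Rabs (x - (1 + u) / 2).
Proof.
  replace (2 * x - 1 - u) with (2 * (x - (1 + u) / 2)) by field.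
  rewrite Rabs_mult, Rabs_right by lra. reflexivity.
Qed.

Section Rate.
Variables K B : R.
Hypothesis hK : 1 <= K.
Hypothesis hB : 0 < B.
Let sq := sqrt K.
Let a := B * sq / 2.
Let b := B / (2 * sq).

Lemma sq_pos : 0 < sq.
Proof. unfold sq. apply sqrt_lt_R0. lra. Qed.
Lemma sq_sq : sq * sq = K.
Proof. unfold sq. apply sqrt_sqrt. lra. Qed.
Lemma a_pos : 0 < a.
Proof. unfold a. pose proof sq_pos. nra. Qed.
Lemma b_pos : 0 < b.
Proof. unfold b. pose proof sq_pos. apply Rdiv_lt_0_compat; lra. Qed.
Lemma a_mul_b : a * b = B^2 / 4.
Proof. unfold a, b. pose proof sq_pos. field. lra. Qed.
Lemma K_mul_b : K * b / 1 = a.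
Proof. unfold a, b. rewrite <- sq_sq. pose proof sq_pos. field. lra. Qed.
Lemma a_div_K : 1 * a / K = b.
Proof. unfold a, b. rewrite <- sq_sq. pose proof sq_pos. field. lra. Qed.

Definition profile_L := profile 1 K b.
Definition profile_R := profile K 1 a.

Lemma rate_le_profile_L x y : 0 <= y <= 1 -> rate K B x y <= profile_L (2 * x - 1).
Proof.
  intros hy. unfold rate, profile_L, profile. replace ((1 + (2 * x - 1)) / 2) with x by field.
  pose proof (entropy_variational y (b * (2 * x - 1)) hy).
  replace (B * sqrt K / 2 * ((2 * x - 1) * (2 * y - 1)))
    with (K * (b * (2 * x - 1) * (2 * y - 1))).
  - nra.
  - unfold b. fold sq. rewrite <- sq_sq. pose proof sq_pos. field. lra.
Qed.

Lemma rate_le_profile_R x y : 0 <= x <= 1 -> rate K B x y <= profile_R (2 * y - 1).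
Proof.
  intros hx. unfold rate, profile_R, profile. replace ((1 + (2 * y - 1)) / 2) with y by field.
  pose proof (entropy_variational x (a * (2 * y - 1)) hx). unfold a, sq in *.
  replace (B * sqrt K / 2 * ((2 * x - 1) * (2 * y - 1)))
    with (B * sqrt K / 2 * (2 * y - 1) * (2 * x - 1)) by ring. lra.
Qed.

Lemma profile_L_0 : profile_L 0 = ln 2 + K * ln 2.
Proof.
  unfold profile_L, profile. rewrite Rmult_0_r, lcosh_0.
  replace ((1+0)/2) with (1/2) by field. rewrite entropy_half. ring.
Qed.

Lemma profile_R_0 : profile_R 0 = ln 2 + K * ln 2.
Proof.
  unfold profile_R, profile. rewrite Rmult_0_r, lcosh_0.
  replace ((1+0)/2) with (1/2) by field. rewrite entropy_half. ring.
Qed.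

Lemma rate_center : rate K B (1/2) (1/2) = ln 2 + K * ln 2.
Proof. unfold rate. rewrite entropy_half. replace (2 * (1/2) - 1) with 0 by field. ring. Qed.

Lemma rate_le_center_of_antialigned x y : 0 <= x <= 1 -> 0 <= y <= 1 ->
  (2*x-1)*(2*y-1) <= 0 -> rate K B x y <= ln 2 + K * ln 2.
Proof.
  intros hx hy huv. unfold rate. pose proof (entropy_le_ln2 x hx). pose proof (entropy_le_ln2 y hy).
  pose proof a_pos. unfold a, sq in *. nra.
Qed.

Lemma rate_gap_L u : 0 <= u < 1 -> unimodal_at profile_L u ->
  forall d, 0 < d -> exists eta, 0 < eta /\ forall x y, 1/2 <= x <= 1 -> 0 <= y <= 1 ->
    d <= Rabs (x - (1 + u) / 2) -> rate K B x y <= profile_L u - eta.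
Proof.
  intros hu hG d hd. destruct (unimodal_gap profile_L u hu hG (2 * d) ltac:(lra)) as [eta [he H]].
  exists eta. split; [exact he|]. intros x y hx hy hdx.
  pose proof (rate_le_profile_L x y hy).
  pose proof (H (2 * x - 1) ltac:(lra) ltac:(rewrite abs_2_sub; lra)). lra.
Qed.

Lemma rate_gap_R v : 0 <= v < 1 -> unimodal_at profile_R v ->
  forall d, 0 < d -> exists eta, 0 < eta /\ forall x y, 0 <= x <= 1 -> 1/2 <= y <= 1 ->
    d <= Rabs (y - (1 + v) / 2) -> rate K B x y <= profile_R v - eta.
Proof.
  intros hv hG d hd. destruct (unimodal_gap profile_R v hv hG (2 * d) ltac:(lra)) as [eta [he H]].
  exists eta. split; [exact he|]. intros x y hx hy hdy.
  pose proof (rate_le_profile_R x y hx).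
  pose proof (H (2 * y - 1) ltac:(lra) ltac:(rewrite abs_2_sub; lra)). lra.
Qed.

Definition strict_max (xs ys : R) := 1/2 <= xs < 1 /\ 1/2 <= ys < 1 /\
  forall d, 0 < d -> exists eta, 0 < eta /\ forall x y, 0 <= x <= 1 -> 0 <= y <= 1 ->
    (1 + K) / 2 <= x + K * y -> (d <= Rabs (x - xs) \/ d <= Rabs (y - ys)) ->
    rate K B x y <= rate K B xs ys - eta.

Lemma strict_max_subcritical : B <= 2 -> strict_max (1/2) (1/2).
Proof.
  intros hB2.
  assert (hab : a * b <= 1) by (rewrite a_mul_b; nra).
  pose proof a_pos. pose proof b_pos.
  assert (hL : unimodal_at profile_L 0).
  { apply profile_unimodal; [lra|lra|intros; lra|intros w hw].
    rewrite K_mul_b. apply phi_neg_subcritical; auto. }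
  assert (hR : unimodal_at profile_R 0).
  { apply profile_unimodal; [lra|lra|intros; lra|intros w hw].
    rewrite a_div_K. apply phi_neg_subcritical; auto; lra. }
  split; [lra|split; [lra|]]. intros d hd.
  destruct (rate_gap_L 0 ltac:(lra) hL d hd) as [e1 [he1 H1]].
  destruct (rate_gap_R 0 ltac:(lra) hR d hd) as [e2 [he2 H2]].
  rewrite profile_L_0 in H1. rewrite profile_R_0 in H2. replace ((1 + 0) / 2) with (1/2) in * by field.
  exists (Rmin e1 e2). split; [apply Rmin_pos; auto|].
  pose proof (Rmin_l e1 e2). pose proof (Rmin_r e1 e2).
  intros x y hx hy _ hxy. rewrite rate_center.
  assert (hrefl : forall z, Rabs (1 - z - 1/2) = Rabs (z - 1/2)).
  { intros z. rewrite <- Rabs_Ropp. f_equal. field. }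
  destruct hxy as [hdx|hdy].
  - destruct (Rle_or_lt (1/2) x).
    + pose proof (H1 x y ltac:(lra) hy hdx). lra.
    + rewrite <- hrefl in hdx. rewrite <- rate_sym.
      pose proof (H1 (1 - x) (1 - y) ltac:(lra) ltac:(lra) hdx). lra.
  - destruct (Rle_or_lt (1/2) y).
    + pose proof (H2 x y hx ltac:(lra) hdy). lra.
    + rewrite <- hrefl in hdy. rewrite <- rate_sym.
      pose proof (H2 (1 - x) (1 - y) ltac:(lra) ltac:(lra) hdy). lra.
Qed.

Lemma mean_field_pair us : 0 < us < 1 -> phi a b us = 0 ->
  th (a * th (b * us)) = us /\ phi b a (th (b * us)) = 0.
Proof.
  intros hus e. unfold phi in e.
  assert (h : th (a * th (b * us)) = us).
  { replace (a * th (b * us)) with (ath us) by lra. apply th_ath; lra. }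
  split; [exact h|]. unfold phi. rewrite h, ath_th. ring.
Qed.

Lemma supercritical_profiles : 2 < B -> exists us, 0 < us < 1 /\ phi a b us = 0 /\
  0 < th (b * us) < 1 /\ unimodal_at profile_L us /\ unimodal_at profile_R (th (b * us)).
Proof.
  intros hB2. pose proof a_pos as ha. pose proof b_pos as hb.
  assert (hab : 1 < a * b) by (rewrite a_mul_b; nra).
  destruct (phi_unique_root a b ha hb hab) as [us [hus [eus [hu1 hu2]]]].
  destruct (mean_field_pair us hus eus) as [_ evs].
  set (vs := th (b * us)) in *.
  assert (hvs : 0 < vs < 1) by (unfold vs; split; [apply th_pos; nra | apply th_bound]).
  destruct (phi_unique_root b a hb ha ltac:(lra)) as [vr [hvr [evr [hv1 hv2]]]].
  assert (vr = vs) by (apply (phi_root_unique b a); auto; lra). subst vr.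
  exists us. split; [exact hus|split; [exact eus|split; [exact hvs|split]]].
  - apply profile_unimodal; [lra|lra|intros; rewrite K_mul_b; auto..].
  - apply profile_unimodal; [lra|fold vs; lra|intros; rewrite a_div_K; auto..].
Qed.

Lemma rate_at_mean_field us : 0 < us < 1 -> phi a b us = 0 ->
  rate K B ((1 + us) / 2) ((1 + th (b * us)) / 2) = profile_L us /\
  rate K B ((1 + us) / 2) ((1 + th (b * us)) / 2) = profile_R (th (b * us)).
Proof.
  intros hus eus. destruct (mean_field_pair us hus eus) as [thav _].
  set (vs := th (b * us)) in *. pose proof sq_pos.
  split.
  - unfold rate, profile_L, profile. pose proof (entropy_variational_eq (b * us)) as h.
    rewrite gibbs_p_th in h. fold vs in h.
    replace (B * sqrt K / 2 * ((2 * ((1 + us) / 2) - 1) * (2 * ((1 + vs) / 2) - 1)))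
      with (K * (b * us * (2 * ((1 + vs) / 2) - 1))).
    + rewrite <- h. ring.
    + unfold b. fold sq. rewrite <- sq_sq. field. lra.
  - unfold rate, profile_R, profile. pose proof (entropy_variational_eq (a * vs)) as h.
    rewrite gibbs_p_th, thav in h.
    replace (B * sqrt K / 2 * ((2 * ((1 + us) / 2) - 1) * (2 * ((1 + vs) / 2) - 1)))
      with (a * vs * (2 * ((1 + us) / 2) - 1)).
    + rewrite <- h. ring.
    + unfold a. fold sq. field.
Qed.

Lemma strict_max_supercritical : 2 < B -> exists us, 0 < us < 1 /\ phi a b us = 0 /\
  strict_max ((1 + us) / 2) ((1 + th (b * us)) / 2).
Proof.
  intros hB2. destruct (supercritical_profiles hB2) as [us [hus [eus [hvs [hL hR]]]]].
  destruct (rate_at_mean_field us hus eus) as [FL FR].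
  exists us. split; [exact hus|split; [exact eus|]].
  set (vs := th (b * us)) in *.
  split; [lra|split; [lra|]]. intros d hd.
  assert (e0 : profile_L 0 < profile_L us) by (apply (proj1 hL); lra).
  rewrite profile_L_0 in e0.
  destruct (rate_gap_L us ltac:(lra) hL d hd) as [e1 [he1 H1]].
  destruct (rate_gap_R vs ltac:(lra) hR d hd) as [e2 [he2 H2]].
  pose proof (Rmin_l (profile_L us - (ln 2 + K * ln 2)) (Rmin e1 e2)).
  pose proof (Rmin_r (profile_L us - (ln 2 + K * ln 2)) (Rmin e1 e2)).
  pose proof (Rmin_l e1 e2). pose proof (Rmin_r e1 e2).
  exists (Rmin (profile_L us - (ln 2 + K * ln 2)) (Rmin e1 e2)).
  split; [repeat apply Rmin_pos; lra|].
  intros x y hx hy hmaj hd'.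
  (* Off the quadrant [x, y > 1/2] the majority constraint forces [(2x-1)(2y-1) <= 0],
     where the rate is at most [profile_L 0 < profile_L us]. *)
  destruct (Rle_or_lt (2*x-1) 0) as [hu|hu].
  { assert (Huv : (2*x-1)*(2*y-1) <= 0) by (assert (0 <= 2*y-1) by nra; nra).
    pose proof (rate_le_center_of_antialigned x y hx hy Huv). lra. }
  destruct (Rle_or_lt (2*y-1) 0) as [hv|hv].
  { assert (Huv : (2*x-1)*(2*y-1) <= 0) by nra.
    pose proof (rate_le_center_of_antialigned x y hx hy Huv). lra. }
  destruct hd' as [hdx|hdy].
  - pose proof (H1 x y ltac:(lra) hy hdx). lra.
  - pose proof (H2 x y hx ltac:(lra) hdy). lra.
Qed.

End Rate.

(** * Counting configurations *)

Lemma sumR_cons {A} (f : A -> R) x l : sumR f (x :: l) = f x + sumR f l.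
Proof. reflexivity. Qed.

Lemma sumR_app {A} (f : A -> R) l1 l2 : sumR f (l1 ++ l2) = sumR f l1 + sumR f l2.
Proof. induction l1; simpl; unfold sumR in *; simpl; [ring|]. rewrite IHl1. ring. Qed.

Lemma sumR_flat_map {A C} (f : C -> R) (g : A -> list C) l :
  sumR f (flat_map g l) = sumR (fun x => sumR f (g x)) l.
Proof. induction l; simpl; [reflexivity|]. rewrite sumR_app, sumR_cons, IHl. reflexivity. Qed.

Lemma sumR_ext {A} (f g : A -> R) l : (forall x, In x l -> f x = g x) -> sumR f l = sumR g l.
Proof.
  induction l; intros h; [reflexivity|]. rewrite !sumR_cons. f_equal.
  - apply h; now left.
  - apply IHl; intros; apply h; now right.
Qed.

Lemma sumR_le {A} (f g : A -> R) l : (forall x, In x l -> f x <= g x) -> sumR f l <= sumR g l.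
Proof.
  induction l; intros h; [unfold sumR; simpl; lra|]. rewrite !sumR_cons.
  apply Rplus_le_compat; [apply h; now left|apply IHl; intros; apply h; now right].
Qed.

Lemma sumR_plus {A} (f g : A -> R) l : sumR (fun x => f x + g x) l = sumR f l + sumR g l.
Proof. induction l; simpl; [unfold sumR; simpl; ring|]. rewrite !sumR_cons, IHl. ring. Qed.

Lemma sumR_scal_l {A} (f : A -> R) c l : sumR (fun x => c * f x) l = c * sumR f l.
Proof. induction l; simpl; [unfold sumR; simpl; ring|]. rewrite !sumR_cons, IHl. ring. Qed.

Lemma sumR_scal_r {A} (f : A -> R) c l : sumR (fun x => f x * c) l = sumR f l * c.
Proof. rewrite <- (Rmult_comm c), <- sumR_scal_l. apply sumR_ext. intros; ring. Qed.

Lemma sumR_zero {A} (f : A -> R) l : (forall x, In x l -> f x = 0) -> sumR f l = 0.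
Proof.
  induction l; intros h; [reflexivity|]. rewrite sumR_cons, h, IHl; [ring| |now left].
  intros; apply h; now right.
Qed.

Lemma sumR_pos {A} (f : A -> R) l : (forall x, In x l -> 0 < f x) -> l <> [] -> 0 < sumR f l.
Proof.
  destruct l as [|x l]; [intros _ h; now contradiction h|].
  intros h _. rewrite sumR_cons. pose proof (h x (or_introl eq_refl)).
  pose proof (sumR_le (fun _ => 0) f l (fun y hy => Rlt_le _ _ (h y (or_intror hy)))).
  assert (sumR (fun _ : A => 0) l = 0) by (apply sumR_zero; auto). lra.
Qed.

Lemma double_sum_mul (f g : list bool -> R) c l1 l2 :
  sumR (fun s1 => sumR (fun s2 => f s1 * g s2 * c) l2) l1 = sumR f l1 * sumR g l2 * c.
Proof.
  rewrite (sumR_ext _ (fun s1 => f s1 * (sumR g l2 * c))).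
  - rewrite sumR_scal_r. ring.
  - intros s1 _. rewrite (sumR_ext _ (fun s2 => g s2 * (f s1 * c))) by (intros; ring).
    rewrite sumR_scal_r. ring.
Qed.

Lemma sumR_configs_S (f : list bool -> R) m :
  sumR f (configs (S m)) = sumR (fun l => f (true :: l) + f (false :: l)) (configs m).
Proof.
  cbn [configs]. rewrite sumR_flat_map. apply sumR_ext. intros x _. unfold sumR; simpl. ring.
Qed.

Lemma configs_nonempty m : configs m <> [].
Proof.
  induction m; [discriminate|]. cbn [configs]. destruct (configs m) as [|l ls]; [congruence|].
  discriminate.
Qed.

Lemma configs_length m s : In s (configs m) -> length s = m.
Proof.
  revert s; induction m; intros s h.
  - destruct h as [<-|[]]. reflexivity.
  - cbn [configs] in h. apply in_flat_map in h. destruct h as [l [hl hs]].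
    destruct hs as [<-|[<-|[]]]; simpl; f_equal; auto.
Qed.

Lemma count_true_cons b s : count_true (b :: s) = ((if b then 1 else 0) + count_true s)%nat.
Proof. destruct b; reflexivity. Qed.

Lemma count_true_le s : (count_true s <= length s)%nat.
Proof. induction s as [|b s IH]; [cbn; lia|]. rewrite count_true_cons. destruct b; cbn [length]; lia. Qed.

Lemma sum_spin s : sumR spin s = 2 * INR (count_true s) - INR (length s).
Proof.
  induction s as [|b s IH]; [unfold sumR; simpl; ring|].
  rewrite sumR_cons, IH, count_true_cons. cbn [length]. rewrite plus_INR, S_INR.
  destruct b; simpl; ring.
Qed.

Definition ind (b : bool) : R := if b then 1 else 0.

Lemma ind_nonneg b : 0 <= ind b.
Proof. destruct b; simpl; lra. Qed.

Definition num_configs (m j : nat) : R :=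
  sumR (fun s => ind (Nat.eqb (count_true s) j)) (configs m).

Lemma num_configs_binomial m j : num_configs m j = if Nat.leb j m then Binomial.C m j else 0.
Proof.
  revert j; induction m; intros j.
  - unfold num_configs. simpl.
    destruct j; simpl; unfold sumR; simpl; unfold ind, Binomial.C; simpl; try field; ring.
  - unfold num_configs. rewrite sumR_configs_S, sumR_plus.
    change (sumR (fun x => ind (count_true (false::x) =? j)%nat) (configs m)) with (num_configs m j).
    destruct j as [|j].
    + rewrite (sumR_zero (fun x => ind (count_true (true::x) =? 0)%nat)) by reflexivity.
      rewrite IHm. simpl. unfold Binomial.C. rewrite !Nat.sub_0_r.
      pose proof (Factorial.lt_O_fact (S m)). pose proof (Factorial.lt_O_fact m).
      assert (INR (Factorial.fact (S m)) <> 0) by (apply not_0_INR; lia).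
      assert (INR (Factorial.fact m) <> 0) by (apply not_0_INR; lia).
      simpl (Factorial.fact 0). field. simpl INR. repeat split; auto; lra.
    + change (sumR (fun x => ind (count_true (true::x) =? S j)%nat) (configs m))
        with (num_configs m j).
      rewrite !IHm.
      destruct (Nat.leb_spec (S j) (S m)); destruct (Nat.leb_spec j m);
        destruct (Nat.leb_spec (S j) m); try lia.
      * apply pascal. lia.
      * assert (j = m) by lia. subst. unfold Binomial.C. rewrite !Nat.sub_diag. simpl. field.
        pose proof (Factorial.lt_O_fact m). split; apply not_0_INR; lia.
      * ring.
Qed.

(** * Entropy bounds for binomial coefficients *)

Lemma sum_f_R0_term_le (f : nat -> R) N i : (forall j, (j <= N)%nat -> 0 <= f j) -> (i <= N)%nat ->
  f i <= sum_f_R0 f N.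
Proof.
  induction N; intros h hi.
  - simpl. assert (i = 0%nat) by lia. subst; lra.
  - simpl. destruct (Nat.eq_dec i (S N)).
    + subst. assert (0 <= sum_f_R0 f N).
      { clear -h. induction N; simpl; [apply h; lia|].
        pose proof (h (S N) ltac:(lia)). assert (0 <= sum_f_R0 f N) by (apply IHN; intros; apply h; lia).
        lra. }
      lra.
    + pose proof (IHN (fun j hj => h j ltac:(lia)) ltac:(lia)). pose proof (h (S N) ltac:(lia)). lra.
Qed.

Lemma sum_f_R0_le_max (f : nat -> R) N M : (forall j, (j <= N)%nat -> f j <= M) ->
  sum_f_R0 f N <= INR (S N) * M.
Proof.
  induction N; intros h; simpl sum_f_R0.
  - pose proof (h 0%nat ltac:(lia)). simpl. lra.
  - rewrite S_INR. pose proof (IHN (fun j hj => h j ltac:(lia))). pose proof (h (S N) ltac:(lia)).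
    lra.
Qed.

Lemma pow_exp_ln p i : 0 <= p -> (p = 0 -> i = 0%nat) -> p ^ i = exp (INR i * ln p).
Proof.
  intros hp h. destruct i; [simpl; rewrite Rmult_0_l, exp_0; reflexivity|].
  destruct hp as [hp|hp].
  - rewrite <- ln_pow by auto. rewrite exp_ln; [reflexivity|]. apply pow_lt; auto.
  - symmetry in hp. specialize (h hp). discriminate.
Qed.

Lemma binomial_C_nonneg n j : 0 <= Binomial.C n j.
Proof.
  unfold Binomial.C. pose proof (Factorial.lt_O_fact n). pose proof (Factorial.lt_O_fact j).
  pose proof (Factorial.lt_O_fact (n - j)). apply Rlt_le, Rdiv_lt_0_compat.
  - apply lt_0_INR; lia.
  - apply Rmult_lt_0_compat; apply lt_0_INR; lia.
Qed.

Lemma ratio_unit i n : (i <= n)%nat -> (0 < n)%nat -> 0 <= INR i / INR n <= 1.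
Proof.
  intros h hn. pose proof (lt_0_INR n hn) as hn'. apply le_INR in h. split.
  - apply Rdiv_le_0_compat; [apply pos_INR|lra].
  - apply (proj1 (Rdiv_le_1 (INR i) (INR n) hn')). exact h.
Qed.

(* [T] is the binomial law with the empirical success probability [p = i / n]. *)
Section Binomial.
Variables n i : nat.
Hypothesis hn : (0 < n)%nat.
Hypothesis hi : (i <= n)%nat.
Let p := INR i / INR n.
Let q := 1 - p.
Let T j := Binomial.C n j * p ^ j * q ^ (n - j).

Lemma T_sum : sum_f_R0 T n = 1.
Proof. unfold T. rewrite <- binomial. unfold q. replace (p + (1 - p)) with 1 by ring. apply pow1. Qed.

Lemma T_nonneg j : 0 <= T j.
Proof.
  unfold T. pose proof (ratio_unit i n hi hn) as hp. fold p in hp.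
  apply Rmult_le_pos; [apply Rmult_le_pos; [apply binomial_C_nonneg|]|]; apply pow_le; unfold q; lra.
Qed.

Lemma T_entropy : T i = Binomial.C n i * exp (- (INR n * entropy p)).
Proof.
  unfold T. pose proof (ratio_unit i n hi hn) as hp. fold p in hp. pose proof (lt_0_INR n hn).
  assert (ei : INR i = INR n * p) by (unfold p; field; lra).
  assert (eni : INR (n - i) = INR n * q) by (unfold q; rewrite minus_INR by auto; rewrite ei; ring).
  rewrite (pow_exp_ln p i), (pow_exp_ln q (n - i)); try (unfold q; lra).
  - rewrite Rmult_assoc, <- exp_plus, ei, eni. unfold entropy, xlx, q. f_equal. f_equal. ring.
  - intros hq0. apply INR_eq. rewrite eni, hq0, Rmult_0_r. reflexivity.
  - intros hp0. apply INR_eq. rewrite ei, hp0, Rmult_0_r. reflexivity.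
Qed.

Lemma binomial_C_le_exp_entropy : Binomial.C n i <= exp (INR n * entropy p).
Proof.
  assert (h : T i <= 1) by (rewrite <- T_sum; apply sum_f_R0_term_le; auto; intros; apply T_nonneg).
  rewrite T_entropy, exp_Ropp in h. pose proof (exp_pos (INR n * entropy p)).
  apply Rmult_le_reg_r with (/ exp (INR n * entropy p)); [apply Rinv_0_lt_compat; auto|].
  rewrite Rinv_r; lra.
Qed.

Lemma T_step j : (j < n)%nat -> 0 < q -> T (S j) = T j * (INR (n - j) * p / (INR (S j) * q)).
Proof.
  intros hj hq. unfold T. rewrite pascal_step3 by auto.
  replace (n - j)%nat with (S (n - S j)) by lia. simpl pow.
  replace (S (n - S j)) with (n - j)%nat by lia.
  pose proof (lt_0_INR (S j) ltac:(lia)). field. lra.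
Qed.

Lemma T_le_mode j : (0 < i)%nat -> (i < n)%nat -> (j <= n)%nat -> T j <= T i.
Proof.
  intros hi0 hin hj. pose proof (lt_0_INR n hn).
  assert (hp : p = INR i / INR n) by reflexivity.
  assert (hq : q = INR (n - i) / INR n) by (unfold q, p; rewrite minus_INR by lia; field; lra).
  assert (qpos : 0 < q) by (rewrite hq; apply Rdiv_lt_0_compat; auto; apply lt_0_INR; lia).
  assert (up : forall j, (S j <= i)%nat -> T j <= T (S j)).
  { intros j' hj'. rewrite T_step by (lia || auto). pose proof (T_nonneg j').
    assert (1 <= INR (n - j') * p / (INR (S j') * q)).
    { pose proof (lt_0_INR (S j') ltac:(lia)).
      apply Rmult_le_reg_r with (INR (S j') * q); [nra|].
      unfold Rdiv. rewrite Rmult_assoc, Rinv_l by nra.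
      rewrite hp, hq, !minus_INR, S_INR by lia. apply le_INR in hj'. rewrite S_INR in hj'.
      apply Rmult_le_reg_r with (INR n); auto. field_simplify; try lra. pose proof (pos_INR i).
      assert (0 <= INR n * (INR i - INR j' - 1)) by (apply Rmult_le_pos; lra). nra. }
    nra. }
  assert (down : forall j, (i <= j)%nat -> (j < n)%nat -> T (S j) <= T j).
  { intros j' hj1 hj2. rewrite T_step by (lia || auto). pose proof (T_nonneg j').
    assert (INR (n - j') * p / (INR (S j') * q) <= 1).
    { pose proof (lt_0_INR (S j') ltac:(lia)).
      apply Rmult_le_reg_r with (INR (S j') * q); [nra|].
      unfold Rdiv. rewrite Rmult_assoc, Rinv_l by nra.
      rewrite hp, hq, !minus_INR, S_INR by lia. apply le_INR in hj1. apply le_INR in hj2.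
      apply Rmult_le_reg_r with (INR n); auto. field_simplify; try lra.
      assert (INR i <= INR n) by (apply le_INR; lia). nra. }
    nra. }
  destruct (Nat.le_gt_cases j i).
  - assert (hd : forall d, T (i - d) <= T i).
    { induction d; [rewrite Nat.sub_0_r; lra|].
      destruct (Nat.le_gt_cases i d).
      - replace (i - S d)%nat with (i - d)%nat by lia. auto.
      - replace (i - d)%nat with (S (i - S d)) in IHd by lia.
        pose proof (up (i - S d)%nat ltac:(lia)). lra. }
    replace j with (i - (i - j))%nat by lia. apply hd.
  - assert (hd : forall d, (i + d <= n)%nat -> T (i + d) <= T i).
    { induction d; intros hd; [rewrite Nat.add_0_r; lra|].
      replace (i + S d)%nat with (S (i + d)) by lia.
      pose proof (down (i + d)%nat ltac:(lia) ltac:(lia)). pose proof (IHd ltac:(lia)). lra. }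
    replace j with (i + (j - i))%nat by lia. apply hd. lia.
Qed.

Lemma binomial_C_ge_exp_entropy : exp (INR n * entropy p) / INR (S n) <= Binomial.C n i.
Proof.
  pose proof (lt_0_INR (S n) ltac:(lia)). pose proof (exp_pos (INR n * entropy p)).
  assert (edge : forall j, (j = 0 \/ j = n)%nat -> p = INR j / INR n ->
            exp (INR n * entropy p) / INR (S n) <= Binomial.C n j).
  { intros j hj ep.
    pose proof (lt_0_INR n hn).
    assert (hH : entropy p = 0).
    { rewrite ep. unfold entropy, xlx.
      destruct hj as [-> | ->]; [rewrite Rdiv_0_l | rewrite Rdiv_diag by lra];
        rewrite ?Rminus_0_r, ?Rminus_diag, ln_1; ring. }
    assert (hC : Binomial.C n j = 1).
    { assert (INR (Factorial.fact n) <> 0) by (apply not_0_INR; pose proof (Factorial.lt_O_fact n); lia).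
      unfold Binomial.C. destruct hj as [-> | ->]; rewrite ?Nat.sub_0_r, ?Nat.sub_diag; simpl;
        field; auto. }
    rewrite hH, hC, Rmult_0_r, exp_0, S_INR.
    apply (proj1 (Rdiv_le_1 1 (INR n + 1) ltac:(lra))). lra. }
  destruct (Nat.eq_dec i 0) as [h0|h0]; [apply edge; auto|].
  destruct (Nat.eq_dec i n) as [h1|h1]; [apply edge; auto|].
  assert (h : 1 <= INR (S n) * T i).
  { rewrite <- T_sum. apply sum_f_R0_le_max. intros; apply T_le_mode; lia. }
  rewrite T_entropy, exp_Ropp in h.
  apply Rmult_le_reg_r with (INR (S n) * / exp (INR n * entropy p)).
  - apply Rmult_lt_0_compat; auto. apply Rinv_0_lt_compat; auto.
  - replace (exp (INR n * entropy p) / INR (S n) * (INR (S n) * / exp (INR n * entropy p)))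
      with 1 by (field; lra). lra.
Qed.

End Binomial.

(** * Reduction of [Pr] to counts of plus spins *)

Lemma pair_eqb_true u v : pair_eqb u v = true -> u = v.
Proof.
  destruct u, v. unfold pair_eqb. simpl.
  destruct (Req_EM_T r r1); destruct (Req_EM_T r0 r2); try discriminate. intros _; subst; reflexivity.
Qed.

Lemma pair_eqb_refl u : pair_eqb u u = true.
Proof.
  destruct u. unfold pair_eqb. simpl.
  destruct (Req_EM_T r r); [|congruence]. destruct (Req_EM_T r0 r0); congruence.
Qed.

Section Counts.
Variables (k : nat) (B : R) (n : nat).
Let m := (k * n)%nat.

Definition class_weight (i j : nat) : R :=
  exp (beta k B n * (2 * INR i - INR n) * (2 * INR j - INR m)).

Lemma weight_class sL sR : In sL (configs n) -> In sR (configs m) ->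
  weight k B n sL sR = class_weight (count_true sL) (count_true sR).
Proof.
  intros hL hR. unfold weight, class_weight, energy. f_equal.
  rewrite (sumR_ext _ (fun u => spin u * (beta k B n * sumR spin sR))).
  - rewrite sumR_scal_r, !sum_spin, (configs_length n sL hL), (configs_length m sR hR). ring.
  - intros u _. rewrite <- sumR_scal_l, <- sumR_scal_l. apply sumR_ext. intros; ring.
Qed.

Lemma class_weight_flip i j : (i <= n)%nat -> (j <= m)%nat ->
  class_weight (n - i) (m - j) = class_weight i j.
Proof. intros. unfold class_weight. rewrite !minus_INR by auto. f_equal. ring. Qed.

Definition majority_counts (cL cR : nat) : nat * nat :=
  if Rle_dec (INR (n + m) / 2) (INR (cL + cR)) then (cL, cR) else ((n - cL)%nat, (m - cR)%nat).

Lemma phase_counts sL sR : phase k n sL sR =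
  (INR (fst (majority_counts (count_true sL) (count_true sR))) / INR n,
   INR (snd (majority_counts (count_true sL) (count_true sR))) / INR m).
Proof. unfold phase, majority_counts. destruct Rle_dec; reflexivity. Qed.

Lemma majority_counts_spec cL cR : (cL <= n)%nat -> (cR <= m)%nat ->
  let (i, j) := majority_counts cL cR in
  (i <= n)%nat /\ (j <= m)%nat /\ INR (n + m) / 2 <= INR (i + j).
Proof.
  intros hL hR. unfold majority_counts. destruct Rle_dec as [r|r]; [split; [lia|split; [lia|exact r]]|].
  split; [lia|split; [lia|]]. apply Rnot_le_lt in r.
  rewrite !plus_INR, !minus_INR by lia. rewrite !plus_INR in r. lra.
Qed.

Definition phase_mass (u : R * R) : R :=
  sumR (fun sL => sumR (fun sR =>
          if pair_eqb (phase k n sL sR) u then weight k B n sL sR else 0)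
        (configs m)) (configs n).

Lemma Pr_phase_mass u : Pr k B n u = phase_mass u / Zpart k B n.
Proof. reflexivity. Qed.

Lemma Zpart_pos : 0 < Zpart k B n.
Proof.
  unfold Zpart. apply sumR_pos; [|apply configs_nonempty]. intros.
  apply sumR_pos; [|apply configs_nonempty]. intros; apply exp_pos.
Qed.

Lemma phase_mass_ge i j : (i <= n)%nat -> (j <= m)%nat -> INR (n + m) / 2 <= INR (i + j) ->
  num_configs n i * num_configs m j * class_weight i j <= phase_mass (INR i / INR n, INR j / INR m).
Proof.
  intros h1 h2 h3. unfold num_configs. rewrite <- double_sum_mul. unfold phase_mass.
  apply sumR_le. intros sL hL. apply sumR_le. intros sR hR.
  assert (hterm : 0 <= (if pair_eqb (phase k n sL sR) (INR i / INR n, INR j / INR m)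
                         then weight k B n sL sR else 0)) by (destruct pair_eqb; [left; apply exp_pos|lra]).
  destruct (Nat.eqb_spec (count_true sL) i) as [eL|];
    destruct (Nat.eqb_spec (count_true sR) j) as [eR|]; cbn [ind]; try lra.
  rewrite phase_counts. unfold majority_counts. rewrite eL, eR.
  destruct Rle_dec; [|contradiction]. simpl. rewrite pair_eqb_refl, weight_class, eL, eR by auto.
  lra.
Qed.

(* A phase is reached from the counts [(i, j)] or, through the global spin flip, from
   [(n - i, m - j)]; the flip preserves the weight. *)
Lemma phase_mass_le i j : (0 < n)%nat -> (0 < m)%nat -> (i <= n)%nat -> (j <= m)%nat ->
  phase_mass (INR i / INR n, INR j / INR m) <=
  (num_configs n i * num_configs m j + num_configs n (n - i) * num_configs m (m - j)) *
  class_weight i j.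
Proof.
  intros hn hm h1 h2. rewrite Rmult_plus_distr_r. unfold num_configs.
  rewrite <- !double_sum_mul, <- sumR_plus.
  unfold phase_mass. apply sumR_le. intros sL hL. rewrite <- sumR_plus. apply sumR_le. intros sR hR.
  pose proof (lt_0_INR n hn). pose proof (lt_0_INR m hm).
  assert (hterm : forall b c, 0 <= ind b * ind c * class_weight i j)
    by (intros; repeat apply Rmult_le_pos; try apply ind_nonneg; left; apply exp_pos).
  destruct (pair_eqb (phase k n sL sR) _) eqn:E.
  2: { apply Rplus_le_le_0_compat; apply hterm. }
  apply pair_eqb_true in E. rewrite phase_counts in E. injection E as E1 E2.
  assert (F1 : fst (majority_counts (count_true sL) (count_true sR)) = i).
  { apply INR_eq, Rmult_eq_reg_r with (/ INR n); [exact E1|apply Rinv_neq_0_compat; lra]. }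
  assert (F2 : snd (majority_counts (count_true sL) (count_true sR)) = j).
  { apply INR_eq, Rmult_eq_reg_r with (/ INR m); [exact E2|apply Rinv_neq_0_compat; lra]. }
  rewrite weight_class by auto.
  pose proof (count_true_le sL). pose proof (count_true_le sR).
  rewrite (configs_length n sL hL) in *. rewrite (configs_length m sR hR) in *.
  unfold majority_counts in F1, F2. destruct Rle_dec; simpl in F1, F2.
  - rewrite F1, F2, !Nat.eqb_refl. pose proof (hterm (i =? n - i)%nat (j =? m - j)%nat).
    cbn [ind]. lra.
  - assert (eL : count_true sL = (n - i)%nat) by lia.
    assert (eR : count_true sR = (m - j)%nat) by lia.
    rewrite eL, eR, !Nat.eqb_refl, class_weight_flip by auto.
    pose proof (hterm (n - i =? i)%nat (m - j =? j)%nat). cbn [ind]. lra.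
Qed.

Lemma phase_mass_pos_counts u : (0 < n)%nat -> (0 < m)%nat -> 0 < phase_mass u -> exists i j,
  (i <= n)%nat /\ (j <= m)%nat /\ INR (n + m) / 2 <= INR (i + j) /\
  phase_mass u <=
  (num_configs n i * num_configs m j + num_configs n (n - i) * num_configs m (m - j)) *
  class_weight i j /\
  u = (INR i / INR n, INR j / INR m).
Proof.
  intros hn hm h.
  destruct (classic (exists sL sR, In sL (configs n) /\ In sR (configs m) /\ phase k n sL sR = u))
    as [[sL [sR [hL [hR hph]]]]|ne].
  - rewrite phase_counts in hph.
    pose proof (count_true_le sL) as cL. pose proof (count_true_le sR) as cR.
    rewrite (configs_length n sL hL) in cL. rewrite (configs_length m sR hR) in cR.
    pose proof (majority_counts_spec _ _ cL cR) as hspec.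
    destruct (majority_counts (count_true sL) (count_true sR)) as [i j].
    destruct hspec as [hi [hj hmaj]]. simpl in hph. subst u.
    exists i, j. repeat split; auto. apply phase_mass_le; auto.
  - exfalso. assert (phase_mass u = 0); [|lra].
    unfold phase_mass. apply sumR_zero. intros sL hL. apply sumR_zero. intros sR hR.
    destruct (pair_eqb _ u) eqn:E; auto. apply pair_eqb_true in E. exfalso; apply ne. eauto.
Qed.

End Counts.

(** * Laplace estimates *)

Lemma neg_ln_one_sub_bounds t : 0 < t <= 1/2 -> t <= - ln (1 - t) <= t + 2 * t ^ 2.
Proof.
  intros ht. split.
  - pose proof (ln_le_sub_1 (1 - t) ltac:(lra)). lra.
  - pose proof (ln_le_sub_1 (/ (1 - t)) ltac:(apply Rinv_0_lt_compat; lra)) as h.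
    rewrite ln_Rinv in h by lra.
    assert (/ (1 - t) - 1 = t + t ^ 2 / (1 - t)) by (field; lra).
    assert (t ^ 2 / (1 - t) <= 2 * t ^ 2).
    { apply Rmult_le_reg_r with (1 - t); [lra|].
      unfold Rdiv. rewrite Rmult_assoc, Rinv_l by lra. nra. }
    lra.
Qed.

Lemma beta_bounds k B n : (1 <= k)%nat -> 0 < B -> (0 < n)%nat -> 2 * B <= INR n * sqrt (INR k) ->
  INR n * (B * sqrt (INR k) / 2) <= beta k B n * INR n * INR (k * n) <=
  INR n * (B * sqrt (INR k) / 2) + B ^ 2.
Proof.
  intros hk hB hn hb.
  set (K := INR k). set (N := INR n). set (s := sqrt K).
  assert (hK : 1 <= K) by (unfold K; apply (le_INR 1); lia).
  assert (hN : 0 < N) by (unfold N; apply lt_0_INR; lia).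
  assert (hs : 0 < s) by (unfold s; apply sqrt_lt_R0; lra).
  assert (ss : s * s = K) by (unfold s; apply sqrt_sqrt; lra).
  set (t := B / (N * s)).
  assert (ht : 0 < t <= 1/2).
  { unfold t. split; [apply Rdiv_lt_0_compat; nra|].
    apply Rmult_le_reg_r with (N * s); [nra|].
    unfold Rdiv. rewrite Rmult_assoc, Rinv_l by nra. change (2 * B <= N * s) in hb. lra. }
  pose proof (neg_ln_one_sub_bounds t ht) as hl.
  unfold beta. fold K N s t. rewrite mult_INR. fold K N.
  replace (- / 2 * ln (1 - t) * N * (K * N)) with (K * N * N * (- ln (1 - t)) / 2) by field.
  assert (eK : K * N * N * t = N * (B * s)) by (unfold t; rewrite <- ss; field; lra).
  assert (eK2 : K * N * N * t ^ 2 = B ^ 2) by (unfold t; rewrite <- ss; field; lra).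
  assert (hKNN : 0 < K * N * N) by nra.
  split; nra.
Qed.

Lemma entropy_near xs eps : 0 < eps ->
  exists d, 0 < d /\ forall x, Rabs (x - xs) < d -> Rabs (entropy x - entropy xs) < eps.
Proof.
  intros he. pose proof (entropy_continuous xs) as hc.
  unfold continuity_pt, continue_in, limit1_in, limit_in in hc. simpl in hc.
  destruct (hc eps he) as [d [hd H]]. exists d. split; auto. intros x hx.
  destruct (Req_dec x xs) as [->|hne]; [rewrite Rminus_diag, Rabs_R0; lra|].
  apply H. split; [split; [exact I|auto]|exact hx].
Qed.

Lemma rate_near K B xs ys eta : 1 <= K -> 0 < B -> 0 <= ys <= 1 -> 0 < eta ->
  exists d, 0 < d /\ forall x y, 0 <= x <= 1 -> Rabs (x - xs) < d -> Rabs (y - ys) < d ->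
    rate K B xs ys - eta < rate K B x y.
Proof.
  intros hK hB hy he.
  set (c := B * sqrt K / 2).
  assert (hc : 0 < c) by (unfold c; pose proof (sqrt_lt_R0 K ltac:(lra)); nra).
  destruct (entropy_near xs (eta/4) ltac:(lra)) as [d1 [hd1 H1]].
  destruct (entropy_near ys (eta/(4*K)) ltac:(apply Rdiv_lt_0_compat; lra)) as [d2 [hd2 H2]].
  set (d3 := eta / (16 * c)).
  assert (hd3 : 0 < d3) by (unfold d3; apply Rdiv_lt_0_compat; lra).
  exists (Rmin d1 (Rmin d2 d3)). split; [repeat apply Rmin_pos; auto|].
  intros x y hx h1 h2.
  pose proof (Rmin_l d1 (Rmin d2 d3)). pose proof (Rmin_r d1 (Rmin d2 d3)).
  pose proof (Rmin_l d2 d3). pose proof (Rmin_r d2 d3).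
  specialize (H1 x ltac:(lra)). specialize (H2 y ltac:(lra)).
  apply Rabs_def2 in H1. apply Rabs_def2 in H2.
  assert (K * entropy ys - eta / 4 < K * entropy y).
  { replace (eta/4) with (K * (eta / (4*K))) by (field; lra). nra. }
  assert (P : c * ((2 * xs - 1) * (2 * ys - 1)) - eta / 4 <= c * ((2 * x - 1) * (2 * y - 1))).
  { assert (E : (2 * x - 1) * (2 * y - 1) - (2 * xs - 1) * (2 * ys - 1) =
               (2 * x - 1) * (2 * (y - ys)) + (2 * ys - 1) * (2 * (x - xs))) by ring.
    assert (A1 : Rabs ((2 * x - 1) * (2 * (y - ys))) <= 2 * d3).
    { rewrite Rabs_mult. replace (2 * d3) with (1 * (2 * d3)) by ring.
      apply Rmult_le_compat; try apply Rabs_pos; [apply Rabs_le; lra|].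
      rewrite Rabs_mult, (Rabs_right 2) by lra. lra. }
    assert (A2 : Rabs ((2 * ys - 1) * (2 * (x - xs))) <= 2 * d3).
    { rewrite Rabs_mult. replace (2 * d3) with (1 * (2 * d3)) by ring.
      apply Rmult_le_compat; try apply Rabs_pos; [apply Rabs_le; lra|].
      rewrite Rabs_mult, (Rabs_right 2) by lra. lra. }
    apply Rabs_le_between in A1. apply Rabs_le_between in A2.
    assert (4 * d3 * c = eta / 4) by (unfold d3; field; lra).
    nra. }
  unfold rate. fold c. lra.
Qed.

(* Writing [x = i / n], [y = j / (k n)], the mass of the count class [(i, j)] is
   [exp (n rate(x, y))] up to factors polynomial in [n] and [exp (B^2)]. *)
Section Laplace.
Variables (k : nat) (B : R) (n : nat).
Hypothesis hk : (1 <= k)%nat.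
Hypothesis hB : 0 < B.
Hypothesis hn : (0 < n)%nat.
Hypothesis hb : 2 * B <= INR n * sqrt (INR k).
Let m := (k * n)%nat.
Let K := INR k.

Lemma m_pos : (0 < m)%nat.
Proof. unfold m; lia. Qed.

Lemma INR_m : INR m = K * INR n.
Proof. apply mult_INR. Qed.

Lemma scaled_rate x y : INR n * rate K B x y =
  INR n * entropy x + INR m * entropy y + INR n * (B * sqrt K / 2) * ((2 * x - 1) * (2 * y - 1)).
Proof. unfold rate. rewrite INR_m. ring. Qed.

Lemma log_class_weight i j : (i <= n)%nat -> (j <= m)%nat ->
  Rabs (ln (class_weight k B n i j) -
        INR n * (B * sqrt K / 2) * ((2 * (INR i / INR n) - 1) * (2 * (INR j / INR m) - 1)))
  <= B ^ 2.
Proof.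
  intros hi hj. unfold class_weight. rewrite ln_exp. fold m.
  pose proof (lt_0_INR n hn). pose proof (lt_0_INR m m_pos).
  pose proof (ratio_unit i n hi hn). pose proof (ratio_unit j m hj m_pos).
  set (x := INR i / INR n) in *. set (y := INR j / INR m) in *.
  assert (e : beta k B n * (2 * INR i - INR n) * (2 * INR j - INR m) =
              beta k B n * INR n * INR m * ((2 * x - 1) * (2 * y - 1))) by (unfold x, y; field; lra).
  rewrite e. destruct (beta_bounds k B n hk hB hn hb) as [b1 b2]. fold m K in b1, b2.
  assert (hw : -1 <= (2 * x - 1) * (2 * y - 1) <= 1) by (split; nra).
  apply Rabs_le_between. split; nra.
Qed.

Lemma class_mass_ge i j : (i <= n)%nat -> (j <= m)%nat ->
  exp (INR n * rate K B (INR i / INR n) (INR j / INR m) - B ^ 2) / (INR (S n) * INR (S m)) <=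
  num_configs n i * num_configs m j * class_weight k B n i j.
Proof.
  intros hi hj.
  rewrite !num_configs_binomial, (proj2 (Nat.leb_le _ _) hi), (proj2 (Nat.leb_le _ _) hj).
  pose proof (binomial_C_ge_exp_entropy n i hn hi) as L1.
  pose proof (binomial_C_ge_exp_entropy m j m_pos hj) as L2.
  pose proof (log_class_weight i j hi hj) as hw. apply Rabs_le_between in hw.
  pose proof (lt_0_INR (S n) ltac:(lia)). pose proof (lt_0_INR (S m) ltac:(lia)).
  assert (hw' : exp (INR n * (B * sqrt K / 2) * ((2 * (INR i / INR n) - 1) * (2 * (INR j / INR m) - 1))
                     - B ^ 2) <= class_weight k B n i j).
  { rewrite <- (exp_ln (class_weight k B n i j)) by apply exp_pos. apply exp_le. lra. }
  rewrite scaled_rate.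
  replace (exp (INR n * entropy (INR i / INR n) + INR m * entropy (INR j / INR m) +
     INR n * (B * sqrt K / 2) * ((2 * (INR i / INR n) - 1) * (2 * (INR j / INR m) - 1)) - B ^ 2)
     / (INR (S n) * INR (S m)))
    with (exp (INR n * entropy (INR i / INR n)) / INR (S n) *
          (exp (INR m * entropy (INR j / INR m)) / INR (S m)) *
          exp (INR n * (B * sqrt K / 2) * ((2 * (INR i / INR n) - 1) * (2 * (INR j / INR m) - 1))
               - B ^ 2))
    by (unfold Rminus; rewrite !exp_plus; field; lra).
  apply Rmult_le_compat; try (left; apply exp_pos); auto.
  - apply Rmult_le_pos; apply Rlt_le, Rdiv_lt_0_compat; auto; apply exp_pos.
  - apply Rmult_le_compat; auto; apply Rlt_le, Rdiv_lt_0_compat; auto; apply exp_pos.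
Qed.

Lemma class_mass_le i j : (i <= n)%nat -> (j <= m)%nat ->
  (num_configs n i * num_configs m j + num_configs n (n - i) * num_configs m (m - j)) *
  class_weight k B n i j <= 2 * exp (INR n * rate K B (INR i / INR n) (INR j / INR m) + B ^ 2).
Proof.
  intros hi hj. rewrite !num_configs_binomial.
  rewrite (proj2 (Nat.leb_le _ _) hi), (proj2 (Nat.leb_le _ _) hj),
    (proj2 (Nat.leb_le (n - i) n) ltac:(lia)), (proj2 (Nat.leb_le (m - j) m) ltac:(lia)).
  pose proof (lt_0_INR n hn). pose proof (lt_0_INR m m_pos).
  set (x := INR i / INR n). set (y := INR j / INR m).
  pose proof (binomial_C_le_exp_entropy n i hn hi) as U1.
  pose proof (binomial_C_le_exp_entropy m j m_pos hj) as U2.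
  pose proof (binomial_C_le_exp_entropy n (n - i) hn ltac:(lia)) as U3.
  pose proof (binomial_C_le_exp_entropy m (m - j) m_pos ltac:(lia)) as U4.
  assert (e3 : INR (n - i) / INR n = 1 - x) by (unfold x; rewrite minus_INR by auto; field; lra).
  assert (e4 : INR (m - j) / INR m = 1 - y) by (unfold y; rewrite minus_INR by auto; field; lra).
  rewrite e3, entropy_sym in U3. rewrite e4, entropy_sym in U4. fold x y in U1, U2.
  pose proof (log_class_weight i j hi hj) as hw. fold x y in hw. apply Rabs_le_between in hw.
  assert (hw' : class_weight k B n i j <=
                exp (INR n * (B * sqrt K / 2) * ((2 * x - 1) * (2 * y - 1)) + B ^ 2)).
  { rewrite <- (exp_ln (class_weight k B n i j)) by apply exp_pos. apply exp_le. lra. }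
  assert (hC : Binomial.C n i * Binomial.C m j + Binomial.C n (n - i) * Binomial.C m (m - j) <=
               2 * (exp (INR n * entropy x) * exp (INR m * entropy y))).
  { pose proof (Rmult_le_compat _ _ _ _ (binomial_C_nonneg n i) (binomial_C_nonneg m j) U1 U2).
    pose proof (Rmult_le_compat _ _ _ _ (binomial_C_nonneg n (n - i)) (binomial_C_nonneg m (m - j))
      U3 U4). lra. }
  rewrite scaled_rate, !exp_plus.
  replace (2 * (exp (INR n * entropy x) * exp (INR m * entropy y) *
      exp (INR n * (B * sqrt K / 2) * ((2 * x - 1) * (2 * y - 1))) * exp (B ^ 2)))
    with (2 * (exp (INR n * entropy x) * exp (INR m * entropy y)) *
          exp (INR n * (B * sqrt K / 2) * ((2 * x - 1) * (2 * y - 1)) + B ^ 2))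
    by (rewrite exp_plus; ring).
  apply Rmult_le_compat; auto; [|left; apply exp_pos].
  pose proof (binomial_C_nonneg n i). pose proof (binomial_C_nonneg m j).
  pose proof (binomial_C_nonneg n (n - i)). pose proof (binomial_C_nonneg m (m - j)). nra.
Qed.

Lemma rate_comparison i0 j0 i j : (i0 <= n)%nat -> (j0 <= m)%nat -> (i <= n)%nat -> (j <= m)%nat ->
  num_configs n i0 * num_configs m j0 * class_weight k B n i0 j0 <=
  (num_configs n i * num_configs m j + num_configs n (n - i) * num_configs m (m - j)) *
  class_weight k B n i j ->
  INR n * rate K B (INR i0 / INR n) (INR j0 / INR m) -
    (2 * B ^ 2 + ln 2 + ln (INR (S n) * INR (S m)))
  <= INR n * rate K B (INR i / INR n) (INR j / INR m).
Proof.
  intros h1 h2 h3 h4 H.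
  pose proof (class_mass_ge i0 j0 h1 h2) as L. pose proof (class_mass_le i j h3 h4) as U.
  pose proof (lt_0_INR (S n) ltac:(lia)). pose proof (lt_0_INR (S m) ltac:(lia)).
  assert (hD : 0 < INR (S n) * INR (S m)) by nra.
  assert (Q := Rle_trans _ _ _ (Rle_trans _ _ _ L H) U).
  apply ln_le in Q; [|apply Rdiv_lt_0_compat; [apply exp_pos|exact hD]].
  unfold Rdiv in Q.
  rewrite ln_mult, ln_exp, ln_mult, ln_exp, ln_Rinv in Q by (try apply exp_pos; try apply Rinv_0_lt_compat; lra).
  lra.
Qed.

End Laplace.

(** * Convergence of the most likely phase *)

Lemma nat_ceil_le M r : 0 <= r <= INR M -> exists i, (i <= M)%nat /\ r <= INR i < r + 1.
Proof.
  induction M; intros h.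
  - exists 0%nat. simpl in *. split; [lia|lra].
  - rewrite S_INR in h. destruct (Rle_or_lt r (INR M)) as [h1|h1].
    + destruct (IHM ltac:(lra)) as [i [hi hr]]. exists i. split; [lia|lra].
    + exists (S M). rewrite S_INR. split; [lia|lra].
Qed.

Lemma lattice_approx M r : (0 < M)%nat -> 0 <= r <= 1 ->
  exists i, (i <= M)%nat /\ INR M * r <= INR i /\ Rabs (INR i / INR M - r) < / INR M.
Proof.
  intros hM hr. pose proof (lt_0_INR M hM) as hM'.
  destruct (nat_ceil_le M (INR M * r) ltac:(split; nra)) as [i [hi [h1 h2]]].
  exists i. split; [exact hi|split; [exact h1|]].
  replace (INR i / INR M - r) with ((INR i - INR M * r) * / INR M) by (field; lra).
  rewrite Rabs_mult, (Rabs_right (/ INR M)) by (apply Rle_ge, Rlt_le, Rinv_0_lt_compat; lra).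
  rewrite Rabs_right by lra. pose proof (Rinv_0_lt_compat _ hM').
  replace (/ INR M) with (1 * / INR M) at 2 by ring. apply Rmult_lt_compat_r; lra.
Qed.

Lemma eventually_ge_INR r : eventually (fun n => r < INR n).
Proof.
  destruct (INR_unbounded r) as [N hN]. exists N. intros n hn.
  apply le_INR in hn. lra.
Qed.

(* [ln ((n+1)(kn+1)) = O(sqrt n)] makes the Laplace error [o(n)]. *)
Lemma laplace_error_eventually k B eps : (1 <= k)%nat -> 0 < eps ->
  eventually (fun n => 2 * B ^ 2 + ln 2 + ln (INR (S n) * INR (S (k * n))) < INR n * eps).
Proof.
  intros hk he. set (K := INR k). assert (hK : 1 <= K) by (apply (le_INR 1); lia).
  set (c0 := 2 * B ^ 2 + 1). set (c := 4 * sqrt (2 * K)).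
  assert (hc : 0 <= c) by (unfold c; pose proof (sqrt_pos (2 * K)); lra).
  apply (filter_imp (fun n => 1 + 2 * c0 / eps + (2 * c / eps) ^ 2 < INR n));
    [|apply eventually_ge_INR].
  intros n hn. set (N := INR n) in *.
  assert (h1 : 2 * c0 / eps >= 0) by (unfold c0; apply Rle_ge, Rlt_le, Rdiv_lt_0_compat; nra).
  assert (h2 : 0 <= (2 * c / eps) ^ 2) by apply pow2_ge_0.
  assert (hN : 1 < N) by lra.
  assert (hSn : INR (S n) <= 2 * K * N) by (rewrite S_INR; fold N; nra).
  assert (hSm : INR (S (k * n)) <= 2 * K * N) by (rewrite S_INR, mult_INR; fold K N; nra).
  pose proof (lt_0_INR (S n) ltac:(lia)). pose proof (lt_0_INR (S (k * n)) ltac:(lia)).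
  assert (hln : ln (INR (S n) * INR (S (k * n))) <= c * sqrt N).
  { rewrite ln_mult by lra.
    pose proof (ln_le (INR (S n)) _ ltac:(lra) hSn). pose proof (ln_le (INR (S (k * n))) _ ltac:(lra) hSm).
    pose proof (ln_le_2_sqrt (2 * K * N) ltac:(nra)) as hs.
    rewrite (sqrt_mult (2 * K) N) in hs by lra. unfold c. lra. }
  assert (ln2 : ln 2 <= 1) by (pose proof (ln_le_sub_1 2 ltac:(lra)); lra).
  assert (hs : 0 < sqrt N) by (apply sqrt_lt_R0; lra).
  assert (hsN : sqrt N * sqrt N = N) by (apply sqrt_sqrt; lra).
  assert (hc0 : c0 < N * eps / 2).
  { apply (Rmult_lt_compat_r (eps / 2)) in hn; [|lra].
    assert (2 * c0 / eps * (eps / 2) = c0) by (field; lra). nra. }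
  assert (hcs : c * sqrt N <= N * eps / 2).
  { assert (hq : 2 * c / eps <= sqrt N).
    { rewrite <- (sqrt_pow2 (2 * c / eps)) by (apply Rmult_le_pos; [lra|left; apply Rinv_0_lt_compat; lra]).
      apply sqrt_le_1_alt. lra. }
    assert (2 * c <= eps * sqrt N).
    { apply (Rmult_le_compat_r eps) in hq; [|lra].
      replace (2 * c / eps * eps) with (2 * c) in hq by (field; lra). lra. }
    nra. }
  unfold c0 in hc0. lra.
Qed.

Section Maximizer.
Variables (k : nat) (B : R) (ahat : nat -> R * R).
Hypothesis hk : (1 <= k)%nat.
Hypothesis hB : 0 < B.
Hypothesis hmax : forall n : nat, (1 <= n)%nat -> B < INR n * sqrt (INR k) ->
  forall a : R * R, Pr k B n a <= Pr k B n (ahat n).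
Let K := INR k.

Lemma K_ge_1 : 1 <= K.
Proof. apply (le_INR 1); lia. Qed.

(* Compare the maximal phase with the lattice phase nearest to [(xs, ys)]. *)
Lemma maximizer_rate_at xs ys eta dl n : 1/2 <= xs <= 1 -> 1/2 <= ys <= 1 ->
  (forall x y, 0 <= x <= 1 -> Rabs (x - xs) < dl -> Rabs (y - ys) < dl ->
     rate K B xs ys - eta / 2 < rate K B x y) ->
  (0 < n)%nat -> 2 * B < INR n * sqrt K -> / INR n < dl ->
  2 * B ^ 2 + ln 2 + ln (INR (S n) * INR (S (k * n))) < INR n * (eta / 2) ->
  exists x y, ahat n = (x, y) /\ 0 <= x <= 1 /\ 0 <= y <= 1 /\ (1 + K) / 2 <= x + K * y /\
    rate K B xs ys - eta < rate K B x y.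
Proof.
  intros hxs hys hnear hn hbn hdl herr.
  set (m := (k * n)%nat) in *. assert (hm : (0 < m)%nat) by (unfold m; lia).
  pose proof (lt_0_INR n hn) as hnR. pose proof (lt_0_INR m hm) as hmR.
  assert (emR : INR m = K * INR n) by apply mult_INR.
  destruct (lattice_approx n xs hn ltac:(lra)) as [i0 [hi0 [hi0l hi0d]]].
  destruct (lattice_approx m ys hm ltac:(lra)) as [j0 [hj0 [hj0l hj0d]]].
  assert (hmaj0 : INR (n + m) / 2 <= INR (i0 + j0)) by (rewrite !plus_INR; nra).
  assert (hfar : / INR m <= / INR n) by (apply Rinv_le_contravar; [lra|pose proof K_ge_1; nra]).
  pose proof (hnear _ (INR j0 / INR m) (ratio_unit i0 n hi0 hn) ltac:(lra) ltac:(lra)) as hrate0.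
  assert (hP := hmax n ltac:(lia) ltac:(fold K; lra) (INR i0 / INR n, INR j0 / INR m)).
  rewrite !Pr_phase_mass in hP. pose proof (Zpart_pos k B n) as hZ.
  apply Rmult_le_reg_r in hP; [|apply Rinv_0_lt_compat; exact hZ].
  pose proof (phase_mass_ge k B n i0 j0 hi0 hj0 hmaj0) as hlow. fold m in hlow.
  pose proof (class_mass_ge k B n hk hB hn (Rlt_le _ _ hbn) i0 j0 hi0 hj0) as hpos. fold m K in hpos.
  assert (hpos' : 0 < exp (INR n * rate K B (INR i0 / INR n) (INR j0 / INR m) - B ^ 2) /
                      (INR (S n) * INR (S m)))
    by (apply Rdiv_lt_0_compat; [apply exp_pos|apply Rmult_lt_0_compat; apply lt_0_INR; lia]).
  destruct (phase_mass_pos_counts k B n (ahat n) hn hm ltac:(fold m; lra))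
    as [i [j [hi [hj [hmaj [hup ->]]]]]].
  fold m in hi, hj, hmaj, hup |- *.
  pose proof (rate_comparison k B n hk hB hn (Rlt_le _ _ hbn) i0 j0 i j hi0 hj0 hi hj ltac:(fold m; lra))
    as hcmp. fold m K in hcmp.
  exists (INR i / INR n), (INR j / INR m).
  split; [reflexivity|split; [apply ratio_unit; auto|split; [apply ratio_unit; auto|split]]].
  - rewrite !plus_INR in hmaj. apply (Rmult_le_reg_r (INR n)); [lra|].
    pose proof K_ge_1. replace ((INR i / INR n + K * (INR j / INR m)) * INR n) with (INR i + INR j)
      by (rewrite emR; field; lra). rewrite emR in hmaj. lra.
  - assert (hr : INR n * (rate K B xs ys - eta) < INR n * rate K B (INR i / INR n) (INR j / INR m)) by nra.
    apply Rmult_lt_reg_l in hr; lra.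
Qed.

Lemma eventually_maximizer_rate xs ys eta : 1/2 <= xs <= 1 -> 1/2 <= ys <= 1 -> 0 < eta ->
  eventually (fun n => exists x y, ahat n = (x, y) /\ 0 <= x <= 1 /\ 0 <= y <= 1 /\
    (1 + K) / 2 <= x + K * y /\ rate K B xs ys - eta < rate K B x y).
Proof.
  intros hxs hys he. pose proof K_ge_1 as hK.
  assert (hsK : 0 < sqrt K) by (apply sqrt_lt_R0; lra).
  destruct (rate_near K B xs ys (eta / 2) hK hB ltac:(lra) ltac:(lra)) as [dl [hdl hnear]].
  assert (hev := filter_and _ _ (eventually_ge_INR (1 + 2 * B / sqrt K + / dl))
                   (laplace_error_eventually k B (eta / 2) hk ltac:(lra))).
  revert hev. apply filter_imp. intros n [hn herr].
  assert (h1 : 0 < 2 * B / sqrt K) by (apply Rdiv_lt_0_compat; lra).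
  pose proof (Rinv_0_lt_compat dl hdl).
  assert (hn0 : (0 < n)%nat) by (apply INR_lt; simpl; lra).
  apply (maximizer_rate_at xs ys eta dl n hxs hys hnear hn0); auto.
  - apply (proj1 (Rlt_div_l (2 * B) (INR n) (sqrt K) hsK)). lra.
  - rewrite <- (Rinv_inv dl). apply Rinv_lt_contravar; [|lra]. apply Rmult_lt_0_compat; lra.
Qed.

Lemma maximizer_converges xs ys : strict_max K B xs ys ->
  Un_cv (fun n => fst (ahat n)) xs /\ Un_cv (fun n => snd (ahat n)) ys.
Proof.
  intros [hxs [hys hgap]].
  assert (hev : forall eps, 0 < eps -> eventually (fun n =>
            Rabs (fst (ahat n) - xs) < eps /\ Rabs (snd (ahat n) - ys) < eps)).
  { intros eps heps. destruct (hgap eps heps) as [eta [heta hsep]].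
    generalize (eventually_maximizer_rate xs ys eta ltac:(lra) ltac:(lra) heta). apply filter_imp.
    intros n [x [y [-> [hx [hy [hmaj hr]]]]]]. simpl.
    split; apply Rnot_le_lt; intros hd; pose proof (hsep x y hx hy hmaj ltac:(tauto)); lra. }
  split; intros eps heps; destruct (hev eps heps) as [N HN]; exists N; intros n hn;
    apply (HN n); lia.
Qed.

End Maximizer.

(** * The phase diagram *)

Lemma exp_eq_odds_iff c bL w : 0 < bL < 1 ->
  exp (2 * c * (1 - 2 * w)) = (1 - bL) / bL <-> c * (2 * w - 1) = ath (2 * bL - 1).
Proof.
  intros hbL.
  replace ((1 - bL) / bL) with (exp (- (2 * ath (2 * bL - 1))))
    by (rewrite exp_opp_2_ath by lra; field; lra).
  replace (2 * c * (1 - 2 * w)) with (- (2 * (c * (2 * w - 1)))) by ring.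
  split; intros h.
  - apply (f_equal ln) in h. rewrite !ln_exp in h. lra.
  - rewrite h. reflexivity.
Qed.

(* With [u = 2 aL - 1] and [v = 2 aR - 1], the equations of the statement read
   [a v = ath u] and [b u = ath v]. *)
Lemma mean_field_system_iff K B bL bR : 1 <= K -> 1/2 < bL < 1 -> 1/2 < bR < 1 ->
  (exp (B * sqrt K * (1 - 2 * bR)) = (1 - bL) / bL /\
   exp (B / sqrt K * (1 - 2 * bL)) = (1 - bR) / bR) <->
  (phi (B * sqrt K / 2) (B / (2 * sqrt K)) (2 * bL - 1) = 0 /\
   2 * bR - 1 = th (B / (2 * sqrt K) * (2 * bL - 1))).
Proof.
  intros hK hbL hbR. pose proof (sqrt_lt_R0 K ltac:(lra)) as hs.
  replace (B * sqrt K) with (2 * (B * sqrt K / 2)) by field.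
  replace (B / sqrt K) with (2 * (B / (2 * sqrt K))) by (field; lra).
  rewrite !exp_eq_odds_iff by lra. unfold phi.
  split; intros [h1 h2].
  - assert (hv : 2 * bR - 1 = th (B / (2 * sqrt K) * (2 * bL - 1)))
      by (rewrite h2, th_ath; [reflexivity|lra]).
    split; [rewrite <- hv; lra|exact hv].
  - rewrite <- h2 in h1. split; [lra|]. rewrite h2, ath_th. reflexivity.
Qed.

Theorem lemma11 (k : nat) (B : R) (hk : (1 <= k)%nat) (hB : 0 < B)
  (ahat : nat -> R * R)
  (hmax : forall n : nat, (1 <= n)%nat -> B < INR n * sqrt (INR k) ->
            forall a : R * R, Pr k B n a <= Pr k B n (ahat n)) :
  (B <= 2 ->
     Un_cv (fun n => fst (ahat n)) (1/2) /\ Un_cv (fun n => snd (ahat n)) (1/2)) /\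
  (2 < B ->
     exists aL aR : R,
       (1/2 < aL < 1 /\ 1/2 < aR < 1 /\
        exp (B * sqrt (INR k) * (1 - 2 * aR)) = (1 - aL) / aL /\
        exp (B / sqrt (INR k) * (1 - 2 * aL)) = (1 - aR) / aR) /\
       (forall bL bR : R,
          1/2 < bL < 1 -> 1/2 < bR < 1 ->
          exp (B * sqrt (INR k) * (1 - 2 * bR)) = (1 - bL) / bL ->
          exp (B / sqrt (INR k) * (1 - 2 * bL)) = (1 - bR) / bR ->
          bL = aL /\ bR = aR) /\
       Un_cv (fun n => fst (ahat n)) aL /\ Un_cv (fun n => snd (ahat n)) aR).
Proof.
  pose proof (K_ge_1 k hk) as hK.
  split; intros hB2.
  - apply (maximizer_converges k B ahat hk hB hmax), strict_max_subcritical; auto.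
  - destruct (strict_max_supercritical (INR k) B hK hB hB2) as [us [hus [eus hstrict]]].
    set (a := B * sqrt (INR k) / 2) in *. set (b := B / (2 * sqrt (INR k))) in *.
    pose proof (sqrt_lt_R0 (INR k) ltac:(lra)) as hs.
    assert (ha : 0 < a) by (unfold a; nra).
    assert (hb : 0 < b) by (unfold b; apply Rdiv_lt_0_compat; lra).
    assert (hab : 1 < a * b) by (unfold a, b; field_simplify; nra).
    assert (hvs : 0 < th (b * us) < 1) by (split; [apply th_pos; nra|apply th_bound]).
    exists ((1 + us) / 2), ((1 + th (b * us)) / 2). split; [|split].
    + split; [lra|split; [lra|]]. apply mean_field_system_iff; try lra. fold a b.
      replace (2 * ((1 + us) / 2) - 1) with us by field. split; [exact eus|field].
    + intros bL bR hbL hbR e1 e2.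
      destruct (proj1 (mean_field_system_iff _ B bL bR hK hbL hbR) (conj e1 e2)) as [f1 f2].
      fold a b in f1, f2.
      assert (hu : 2 * bL - 1 = us) by (apply (phi_root_unique a b); auto; lra).
      rewrite hu in f2. split; lra.
    + exact (maximizer_converges k B ahat hk hB hmax _ _ hstrict).
Qed.
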